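(* Let $\pi:\mathcal{B}(\ell^2)\to\mathcal{C}(\ell^2)$ be the natural quotient map onto the Calkin algebra, and let $P,Q\in\mathcal{B}(\ell^2)$ be orthogonal projections. Then $\pi(P)\le\pi(Q)$ if and only if $\mathrm{ran}(P)$ is essentially contained in $\mathrm{ran}(Q)$.
   Context: $\ell^2$ is the complex separable infinite-dimensional Hilbert space, $\mathcal{B}(\ell^2)$ the bounded operators, $\mathcal{K}(\ell^2)$ the compact operators, $\mathcal{C}(\ell^2)=\mathcal{B}(\ell^2)/\mathcal{K}(\ell^2)$ the Calkin algebra. For self-adjoint elements $a,b$ of a C*-algebra, $a\le b$ means $b-a$ is positive (i.e. $b-a=c^*c$ for some $c$ in the algebra). For closed subspaces $E,F$ of $\ell^2$, $E$ is essentially contained in $F$ if for every $\epsilon>0$ there is a closed subspace $E_0\subseteq E$ of finite codimension in $E$ such that every unit vector $v\in E_0$ satisfies $d(v,F)\le\epsilon$, where $d(v,F)$ is the distance from $v$ to $F$. *)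

From Stdlib Require Import Reals List.
From Coquelicot Require Import Coquelicot.
Import ListNotations.

Definition vec := nat -> C.
Definition vadd (x y : vec) : vec := fun n => Cplus (x n) (y n).
Definition vsub (x y : vec) : vec := fun n => Cminus (x n) (y n).
Definition vscal (a : C) (x : vec) : vec := fun n => Cmult a (x n).
Definition vzero : vec := fun _ => RtoC 0.

Definition in_l2 (x : vec) : Prop := ex_series (fun n => (Cmod (x n))^2).
Definition l2norm (x : vec) : R := sqrt (Series (fun n => (Cmod (x n))^2)).
Definition inner (x y : vec) : C :=
  (Series (fun n => Re (Cmult (x n) (Cconj (y n)))),
   Series (fun n => Im (Cmult (x n) (Cconj (y n))))).

(* Operators; only their values on ell^2 matter. *)
Definition operator := vec -> vec.

Definition is_bounded_op (T : operator) : Prop :=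
  (forall x, in_l2 x -> in_l2 (T x)) /\
  (forall x y, in_l2 x -> in_l2 y -> T (vadd x y) = vadd (T x) (T y)) /\
  (forall a x, in_l2 x -> T (vscal a x) = vscal a (T x)) /\
  (exists M : R, forall x, in_l2 x -> l2norm (T x) <= M * l2norm x).

Definition is_adjoint (T S : operator) : Prop :=
  forall x y, in_l2 x -> in_l2 y -> inner (T x) y = inner x (S y).

Definition is_compact_op (K : operator) : Prop :=
  is_bounded_op K /\
  forall eps : R, 0 < eps ->
    exists l : list vec, (forall u, In u l -> in_l2 u) /\
      forall x, in_l2 x -> l2norm x <= 1 ->
        exists u, In u l /\ l2norm (vsub (K x) u) < eps.

Definition is_orth_proj (P : operator) : Prop :=
  is_bounded_op P /\ (forall x, in_l2 x -> P (P x) = P x) /\ is_adjoint P P.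

(* pi(P) <= pi(Q) in the Calkin algebra: pi(Q) - pi(P) = c^* c for some c in
   C(ell^2); writing c = pi(C), this means Q - P - C^* C is compact. *)
Definition calkin_le (P Q : operator) : Prop :=
  exists (Cop Cadj K : operator),
    is_bounded_op Cop /\ is_bounded_op Cadj /\ is_adjoint Cop Cadj /\
    is_compact_op K /\
    forall x, in_l2 x -> vsub (Q x) (P x) = vadd (Cadj (Cop x)) (K x).

Definition subspace := vec -> Prop.

Definition range (P : operator) : subspace :=
  fun v => exists x, in_l2 x /\ v = P x.

Definition is_closed_subspace (E : subspace) : Prop :=
  (forall v, E v -> in_l2 v) /\
  E vzero /\
  (forall v w, E v -> E w -> E (vadd v w)) /\
  (forall a v, E v -> E (vscal a v)) /\
  (forall v, in_l2 v ->
     (forall eps : R, 0 < eps -> exists w, E w /\ l2norm (vsub v w) < eps) -> E v).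

Fixpoint lincomb (cs : list (C * vec)) : vec :=
  match cs with
  | [] => vzero
  | (a, u) :: cs' => vadd (vscal a u) (lincomb cs')
  end.

Definition finite_codim_in (E0 E : subspace) : Prop :=
  exists l : list vec, (forall u, In u l -> E u) /\
    forall v, E v -> exists cs : list (C * vec),
      (forall p, In p cs -> In (snd p) l) /\ E0 (vsub v (lincomb cs)).

Definition dist (v : vec) (F : subspace) : Rbar :=
  Glb_Rbar (fun r => exists w, F w /\ r = l2norm (vsub v w)).

Definition ess_contained (E F : subspace) : Prop :=
  forall eps : R, 0 < eps ->
    exists E0 : subspace,
      is_closed_subspace E0 /\ (forall v, E0 v -> E v) /\ finite_codim_in E0 E /\
      forall v, E0 v -> l2norm v = 1 -> Rbar_le (dist v F) eps.

(* Forward: if [Q - P = C^* C + K] with [K] compact, then for [v] in [ran P] the vector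
   [w = v - Q v] satisfies [|w|^4 <= |v|^2 |K w| |w|], because [|w|^2 = <v, P w>] and
   [- |P w|^2 = <(Q - P) w, w> = |C w|^2 + <K w, w>].  Imposing the finitely many conditions
   [<K w, u> = 0], for [u] in a finite [delta]-net of the image of the unit ball under [K], leaves
   a closed subspace of finite codimension in [ran P] on which [|K w| <= 2 delta], so that its unit
   vectors lie within [(4 delta)^(1/4)] of [ran Q].
   Backward: with [C = Q - P] one has [Q - P - C^2 = -((1 - Q) P + P (1 - Q))], so it suffices
   that both summands are compact.  Both are [eps]-small on the almost contained subspace [E0],
   and [ran P] is [E0] plus finitely many vectors.  Adding one vector changes the projection by a
   rank-one operator, whose unit vector comes from the Riesz representation of the coefficient
   functional; this does not affect the existence of finite nets.  Peeling these rank-one pieces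
   off [P] avoids constructing projections onto arbitrary closed subspaces. *)

From Pilot Require Import Defs.
From Stdlib Require Import Reals List Lra Lia Psatz FunctionalExtensionality ClassicalEpsilon.
From Coquelicot Require Import Coquelicot.
Import ListNotations.
Open Scope R_scope.

Lemma ex_series_R_le (a b : nat -> R) :
  (forall n, Rabs (a n) <= b n) -> ex_series b -> ex_series a.
Proof. intros; apply (@ex_series_le R_AbsRing R_CompleteNormedModule a b); auto. Qed.

Lemma ex_series_R_plus (a b : nat -> R) :
  ex_series a -> ex_series b -> ex_series (fun n => a n + b n).
Proof. intros; apply (ex_series_plus a b); auto. Qed.

Lemma ex_series_R_scal (c : R) (a : nat -> R) :
  ex_series a -> ex_series (fun n => c * a n).
Proof. intros; apply (ex_series_scal_l c a); auto. Qed.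

Lemma ex_series_R_opp (a : nat -> R) : ex_series a -> ex_series (fun n => - a n).
Proof.
  intros Ha. eapply ex_series_ext; [|apply (ex_series_R_scal (-1) a Ha)].
  intros; simpl; ring.
Qed.

Lemma Series_zero : Series (fun _ : nat => 0) = 0.
Proof.
  rewrite (Series_ext _ (fun _ => 0 * 0)) by (intros; ring).
  rewrite (Series_scal_l 0 (fun _ => 0)); ring.
Qed.

Lemma Series_nonneg (a : nat -> R) : (forall n, 0 <= a n) -> ex_series a -> 0 <= Series a.
Proof.
  intros Ha Hex. rewrite <- Series_zero. apply Series_le; auto. intros; split; [lra | auto].
Qed.

Lemma Series_le_Series (a b : nat -> R) :
  (forall n, a n <= b n) -> ex_series a -> ex_series b -> Series a <= Series b.
Proof.
  intros Hab Ha Hb.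
  assert (0 <= Series (fun n => b n - a n)).
  { apply Series_nonneg; [intros n; specialize (Hab n); lra|].
    apply ex_series_R_plus; auto. now apply ex_series_R_opp. }
  rewrite Series_minus in H by auto. lra.
Qed.

Lemma term_le_Series (a : nat -> R) n :
  (forall k, 0 <= a k) -> ex_series a -> a n <= Series a.
Proof.
  intros H Ha. rewrite (Series_incr_n a (S n)) by (auto with arith). simpl pred.
  assert (0 <= Series (fun k => a (S n + k)%nat)).
  { apply Series_nonneg; auto. now apply (ex_series_incr_n a (S n)). }
  assert (a n <= sum_f_R0 a n).
  { destruct n; simpl; [lra|]. pose proof (cond_pos_sum a n H); lra. }
  lra.
Qed.

Lemma amgm (t u v : R) : 0 < t -> 2 * (u * v) <= t * u ^ 2 + v ^ 2 / t.
Proof.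
  intros Ht.
  assert (t * u ^ 2 + v ^ 2 / t - 2 * (u * v) = (t * u - v) ^ 2 / t) by (field; lra).
  assert (0 <= (t * u - v) ^ 2 / t).
  { apply Rmult_le_pos; [apply pow2_ge_0 | left; now apply Rinv_0_lt_compat]. }
  lra.
Qed.

Lemma le_mul_of_amgm (a b S : R) : 0 <= a -> 0 <= b ->
  (forall t, 0 < t -> 2 * S <= t * a ^ 2 + b ^ 2 / t) -> S <= a * b.
Proof.
  intros Ha Hb H. apply Rnot_gt_le; intro HS.
  (* Test with [t = (b + eta) / (a + eta)], [eta] a small fraction of the excess [S - a b]. *)
  set (eta := (S - a * b) / (a + b + 1)).
  assert (Heta : 0 < eta) by (apply Rdiv_lt_0_compat; lra).
  assert (Ht : 0 < (b + eta) / (a + eta)) by (apply Rdiv_lt_0_compat; lra).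
  specialize (H _ Ht).
  assert (E1 : (b + eta) / (a + eta) * a ^ 2 <= (b + eta) * a).
  { replace ((b + eta) / (a + eta) * a ^ 2) with ((b + eta) * a * (a / (a + eta))) by (field; lra).
    assert (a / (a + eta) <= 1) by (apply Rmult_le_reg_r with (a + eta); [lra | field_simplify; lra]).
    assert (0 <= (b + eta) * a) by nra. nra. }
  assert (E2 : b ^ 2 / ((b + eta) / (a + eta)) <= b * (a + eta)).
  { replace (b ^ 2 / ((b + eta) / (a + eta))) with (b * (a + eta) * (b / (b + eta))) by (field; lra).
    assert (b / (b + eta) <= 1) by (apply Rmult_le_reg_r with (b + eta); [lra | field_simplify; lra]).
    assert (0 <= b * (a + eta)) by nra. nra. }
  assert (eta * (a + b + 1) = S - a * b) by (unfold eta; field; lra).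
  nra.
Qed.

Lemma sq_le_nonneg a b : 0 <= a -> 0 <= b -> a ^ 2 <= b ^ 2 -> a <= b.
Proof. intros; nra. Qed.

Lemma le_of_sq_le_mul a b : 0 <= b -> a ^ 2 <= a * b -> a <= b.
Proof.
  intros Hb H. apply Rnot_lt_le. intro Hlt.
  assert (a * b < a * a) by (apply Rmult_lt_compat_l; lra). simpl in H. lra.
Qed.

Lemma pow4_le a e : 0 <= a -> 0 <= e -> a ^ 4 <= e ^ 4 -> a <= e.
Proof.
  intros. apply sq_le_nonneg; auto. apply sq_le_nonneg; nra.
Qed.

Lemma eq0_of_small (a c : R) : 0 <= c -> (forall eps, 0 < eps -> Rabs a <= c * eps) -> a = 0.
Proof.
  intros Hc H. destruct (Req_dec a 0) as [|Hne]; auto. exfalso.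
  assert (Ha : 0 < Rabs a) by (apply Rabs_pos_lt; auto).
  specialize (H (Rabs a / (2 * (c + 1))) ltac:(apply Rdiv_lt_0_compat; lra)).
  replace (c * (Rabs a / (2 * (c + 1)))) with (Rabs a * (c / (2 * (c + 1)))) in H by (field; lra).
  assert (c / (2 * (c + 1)) < 1) by (apply Rmult_lt_reg_r with (2 * (c + 1)); [lra | field_simplify; lra]).
  nra.
Qed.

Lemma Cmod_le_abs_sum (z : C) : Cmod z <= Rabs (fst z) + Rabs (snd z).
Proof.
  pose proof (Rabs_pos (fst z)); pose proof (Rabs_pos (snd z)).
  apply sq_le_nonneg; [apply Cmod_ge_0 | lra|].
  rewrite Cmod2_alt. unfold Re, Im. rewrite <- (pow2_abs (fst z)), <- (pow2_abs (snd z)). nra.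
Qed.

Lemma Im_le_Cmod (c : C) : Rabs (Im c) <= Cmod c.
Proof. eapply Rle_trans; [apply Rmax_r | apply Rmax_Cmod]. Qed.

Ltac vext := apply functional_extensionality; intro; unfold vadd, vsub, vscal, vzero.

Lemma vsub_as_vadd x y : vsub x y = vadd x (vscal (RtoC (-1)) y).
Proof.
  vext. unfold RtoC. destruct (x x0), (y x0).
  unfold Cmult, Cminus, Cplus, Copp; simpl. f_equal; ring.
Qed.

Lemma vzero_as_vscal : vzero = vscal (RtoC 0) vzero.
Proof. vext. ring. Qed.

Lemma vsub_diag x : vsub x x = vzero.
Proof. vext. ring. Qed.

Lemma vsub_0_r x : vsub x vzero = x.
Proof. vext. ring. Qed.

Lemma vsub_vscal_0 v z : vsub v (vscal (RtoC 0) z) = v.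
Proof. vext. ring. Qed.

Lemma vsub_eq0 x y : vsub x y = vzero -> x = y.
Proof.
  intros H. apply functional_extensionality; intro n. apply (f_equal (fun f => f n)) in H.
  unfold vsub, vzero in H.
  replace (x n) with (Cplus (Cminus (x n) (y n)) (y n)) by ring. rewrite H. ring.
Qed.

Definition sqmod (x : vec) (n : nat) : R := (Cmod (x n)) ^ 2.

Lemma sqmod_nonneg x n : 0 <= sqmod x n.
Proof. apply pow2_ge_0. Qed.

Lemma sqmod_alt x n : sqmod x n = fst (x n) ^ 2 + snd (x n) ^ 2.
Proof. apply Cmod2_alt. Qed.

Lemma sqmod_vscal a x n : sqmod (vscal a x) n = (Cmod a) ^ 2 * sqmod x n.
Proof. unfold sqmod, vscal. rewrite Cmod_mult. ring. Qed.

Lemma in_l2_zero : in_l2 vzero.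
Proof.
  apply (ex_series_R_le _ (fun n => (/ 2) ^ n)).
  - intros n. unfold vzero. rewrite Cmod_0, pow_i, Rabs_R0 by lia. apply pow_le; lra.
  - apply ex_series_geom. rewrite Rabs_pos_eq; lra.
Qed.

Lemma in_l2_add x y : in_l2 x -> in_l2 y -> in_l2 (vadd x y).
Proof.
  intros Hx Hy. apply (ex_series_R_le _ (fun n => 2 * sqmod x n + 2 * sqmod y n)).
  - intros n. fold (sqmod (vadd x y) n). rewrite Rabs_pos_eq by apply sqmod_nonneg.
    rewrite !sqmod_alt. unfold vadd. destruct (x n) as [p q], (y n) as [u v]. simpl.
    pose proof (pow2_ge_0 (p - u)); pose proof (pow2_ge_0 (q - v)). simpl in *. nra.
  - apply ex_series_R_plus; now apply ex_series_R_scal.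
Qed.

Lemma in_l2_scal a x : in_l2 x -> in_l2 (vscal a x).
Proof.
  intros Hx. apply (ex_series_ext (fun n => (Cmod a) ^ 2 * sqmod x n)).
  - intros; now rewrite <- sqmod_vscal.
  - now apply ex_series_R_scal.
Qed.

Lemma in_l2_sub x y : in_l2 x -> in_l2 y -> in_l2 (vsub x y).
Proof. intros. rewrite vsub_as_vadd. now apply in_l2_add, in_l2_scal. Qed.

Lemma l2norm_nonneg x : 0 <= l2norm x.
Proof. apply sqrt_pos. Qed.

Lemma l2norm_sq x : in_l2 x -> l2norm x ^ 2 = Series (sqmod x).
Proof. intros Hx. apply pow2_sqrt, Series_nonneg; auto. apply sqmod_nonneg. Qed.

Lemma l2norm_vscal a x : in_l2 x -> l2norm (vscal a x) = Cmod a * l2norm x.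
Proof.
  intros Hx. unfold l2norm.
  rewrite (Series_ext _ (fun n => (Cmod a) ^ 2 * sqmod x n)) by (intros; apply sqmod_vscal).
  rewrite Series_scal_l, sqrt_mult_alt by apply pow2_ge_0.
  now rewrite sqrt_pow2 by apply Cmod_ge_0.
Qed.

Lemma l2norm_vzero : l2norm vzero = 0.
Proof. rewrite vzero_as_vscal, l2norm_vscal, Cmod_0 by apply in_l2_zero. ring. Qed.

Lemma l2norm_eq0 x : in_l2 x -> l2norm x = 0 -> x = vzero.
Proof.
  intros Hx H0. pose proof (l2norm_sq x Hx) as Hs. rewrite H0 in Hs.
  apply functional_extensionality; intros n.
  pose proof (term_le_Series (sqmod x) n (sqmod_nonneg x) Hx).
  pose proof (Cmod_ge_0 (x n)). unfold sqmod in *.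
  assert (Cmod (x n) = 0) by (simpl in *; nra).
  now apply Cmod_eq_0.
Qed.

Definition re_term (x y : vec) n := Re (Cmult (x n) (Cconj (y n))).
Definition im_term (x y : vec) n := Im (Cmult (x n) (Cconj (y n))).

Lemma inner_eq x y : inner x y = (Series (re_term x y), Series (im_term x y)).
Proof. reflexivity. Qed.

Lemma re_term_bound x y n : Rabs (re_term x y n) <= Cmod (x n) * Cmod (y n).
Proof. unfold re_term. rewrite <- (Cmod_conj (y n)), <- Cmod_mult. apply re_le_Cmod. Qed.

Lemma im_term_bound x y n : Rabs (im_term x y n) <= Cmod (x n) * Cmod (y n).
Proof. unfold im_term. rewrite <- (Cmod_conj (y n)), <- Cmod_mult. apply Im_le_Cmod. Qed.

Lemma series_cauchy_schwarz (x y : vec) (c : nat -> R) : in_l2 x -> in_l2 y ->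
  (forall n, Rabs (c n) <= Cmod (x n) * Cmod (y n)) ->
  ex_series c /\ Rabs (Series c) <= l2norm x * l2norm y.
Proof.
  intros Hx Hy Hc.
  set (p := fun n => Cmod (x n) * Cmod (y n)).
  assert (Hp0 : forall n, 0 <= p n) by (intros; apply Rmult_le_pos; apply Cmod_ge_0).
  assert (Hamgm : forall t, 0 < t -> ex_series (fun n => t * sqmod x n + / t * sqmod y n) /\
                                     forall n, 2 * p n <= t * sqmod x n + / t * sqmod y n).
  { intros t Ht. split; [apply ex_series_R_plus; now apply ex_series_R_scal|].
    intros n. rewrite Rmult_comm with (r1 := / t). apply amgm; auto. }
  assert (Hexp : ex_series p).
  { destruct (Hamgm 1 Rlt_0_1) as [Hex Hle]. apply (ex_series_R_le _ _) with (2 := Hex).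
    intros n. rewrite Rabs_pos_eq by auto. specialize (Hle n). rewrite Rinv_1 in Hle.
    pose proof (Hp0 n); pose proof (sqmod_nonneg x n); pose proof (sqmod_nonneg y n). lra. }
  assert (Habs : ex_series (fun n => Rabs (c n))).
  { apply (ex_series_R_le _ p); auto. intros; now rewrite Rabs_Rabsolu. }
  split; [now apply ex_series_Rabs|].
  eapply Rle_trans; [now apply Series_Rabs|].
  eapply Rle_trans; [apply Series_le with (b := p); auto; intros; split; [apply Rabs_pos | auto]|].
  apply le_mul_of_amgm; try apply l2norm_nonneg.
  intros t Ht. rewrite (l2norm_sq x Hx), (l2norm_sq y Hy).
  destruct (Hamgm t Ht) as [Hex Hle].
  rewrite <- (Series_scal_l 2 p).
  eapply Rle_trans.
  { apply (Series_le_Series _ (fun n => t * sqmod x n + / t * sqmod y n)); auto.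
    now apply ex_series_R_scal. }
  rewrite Series_plus, !Series_scal_l by (now apply ex_series_R_scal). unfold Rdiv. lra.
Qed.

Lemma ex_series_re_term x y : in_l2 x -> in_l2 y -> ex_series (re_term x y).
Proof. intros; apply (series_cauchy_schwarz x y); auto. apply re_term_bound. Qed.

Lemma ex_series_im_term x y : in_l2 x -> in_l2 y -> ex_series (im_term x y).
Proof. intros; apply (series_cauchy_schwarz x y); auto. apply im_term_bound. Qed.

Lemma inner_re_bound x y : in_l2 x -> in_l2 y -> Rabs (fst (inner x y)) <= l2norm x * l2norm y.
Proof. intros; apply (series_cauchy_schwarz x y); auto. apply re_term_bound. Qed.

Lemma inner_im_bound x y : in_l2 x -> in_l2 y -> Rabs (snd (inner x y)) <= l2norm x * l2norm y.
Proof. intros; apply (series_cauchy_schwarz x y); auto. apply im_term_bound. Qed.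

Lemma inner_Cmod_bound x y : in_l2 x -> in_l2 y -> Cmod (inner x y) <= 2 * (l2norm x * l2norm y).
Proof.
  intros. eapply Rle_trans; [apply Cmod_le_abs_sum|].
  pose proof (inner_re_bound x y H H0). pose proof (inner_im_bound x y H H0). lra.
Qed.

Lemma inner_add_l x y z : in_l2 x -> in_l2 y -> in_l2 z ->
  inner (vadd x y) z = Cplus (inner x z) (inner y z).
Proof.
  intros. rewrite !inner_eq. unfold Cplus; simpl. f_equal.
  - rewrite <- Series_plus by (apply ex_series_re_term; auto). apply Series_ext.
    intros n. unfold re_term, vadd. destruct (x n), (y n), (z n). simpl. ring.
  - rewrite <- Series_plus by (apply ex_series_im_term; auto). apply Series_ext.
    intros n. unfold im_term, vadd. destruct (x n), (y n), (z n). simpl. ring.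
Qed.

Lemma inner_scal_l a x z : in_l2 x -> in_l2 z -> inner (vscal a x) z = Cmult a (inner x z).
Proof.
  intros. rewrite !inner_eq. destruct a as [a1 a2]. unfold Cmult; simpl.
  pose proof (ex_series_re_term x z H H0). pose proof (ex_series_im_term x z H H0).
  f_equal.
  - unfold Rminus. rewrite <- (Series_scal_l a1), <- (Series_scal_l a2), <- Series_opp,
      <- Series_plus by (try apply ex_series_R_opp; now apply ex_series_R_scal).
    apply Series_ext. intros n. unfold re_term, im_term, vscal. destruct (x n), (z n). simpl. ring.
  - rewrite <- (Series_scal_l a1), <- (Series_scal_l a2),
      <- Series_plus by (now apply ex_series_R_scal).
    apply Series_ext. intros n. unfold re_term, im_term, vscal. destruct (x n), (z n). simpl. ring.
Qed.

Lemma inner_sub_l x y z : in_l2 x -> in_l2 y -> in_l2 z ->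
  inner (vsub x y) z = Cminus (inner x z) (inner y z).
Proof.
  intros. rewrite vsub_as_vadd, inner_add_l, inner_scal_l by (try apply in_l2_scal; auto).
  unfold RtoC. destruct (inner x z), (inner y z).
  unfold Cmult, Cminus, Cplus, Copp; simpl. f_equal; ring.
Qed.

Lemma inner_conj x y : inner y x = Cconj (inner x y).
Proof.
  rewrite !inner_eq. unfold Cconj; simpl. f_equal.
  - apply Series_ext; intros n. unfold re_term. destruct (x n), (y n). simpl. ring.
  - rewrite <- Series_opp. apply Series_ext; intros n. unfold im_term. destruct (x n), (y n). simpl. ring.
Qed.

Lemma inner_self x : in_l2 x -> inner x x = RtoC (l2norm x ^ 2).
Proof.
  intros. rewrite inner_eq, l2norm_sq by auto. unfold RtoC. f_equal.
  - apply Series_ext; intros n. rewrite sqmod_alt. unfold re_term. destruct (x n). simpl. ring.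
  - rewrite <- Series_zero. apply Series_ext; intros n. unfold im_term. destruct (x n). simpl. ring.
Qed.

Lemma inner_add_r x y z : in_l2 x -> in_l2 y -> in_l2 z ->
  inner z (vadd x y) = Cplus (inner z x) (inner z y).
Proof.
  intros. rewrite (inner_conj (vadd x y)), inner_add_l, (inner_conj x z), (inner_conj y z) by auto.
  destruct (inner x z), (inner y z). unfold Cconj, Cplus; simpl. f_equal; ring.
Qed.

Lemma inner_sub_r x y z : in_l2 x -> in_l2 y -> in_l2 z ->
  inner z (vsub x y) = Cminus (inner z x) (inner z y).
Proof.
  intros. rewrite (inner_conj (vsub x y)), inner_sub_l, (inner_conj x z), (inner_conj y z) by auto.
  destruct (inner x z), (inner y z). unfold Cconj, Cminus, Cplus, Copp; simpl. f_equal; ring.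
Qed.

Lemma inner_scal_r a x z : in_l2 x -> in_l2 z -> inner z (vscal a x) = Cmult (Cconj a) (inner z x).
Proof.
  intros. rewrite (inner_conj (vscal a x)), inner_scal_l, (inner_conj x z) by auto.
  destruct (inner x z), a. unfold Cconj, Cmult; simpl. f_equal; ring.
Qed.

Lemma inner_zero_l u : in_l2 u -> inner vzero u = RtoC 0.
Proof. intros. rewrite vzero_as_vscal, inner_scal_l by (auto; apply in_l2_zero). ring. Qed.

Lemma inner_zero_r u : in_l2 u -> inner u vzero = RtoC 0.
Proof. intros. rewrite inner_conj, inner_zero_l by auto. unfold Cconj, RtoC; simpl; f_equal; ring. Qed.

(* The real part of the inner product is all the geometry needs. *)

Definition rinner (x y : vec) : R := fst (inner x y).

Lemma rinner_self x : in_l2 x -> rinner x x = l2norm x ^ 2.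
Proof. intros; unfold rinner; now rewrite inner_self. Qed.

Lemma rinner_sym x y : rinner y x = rinner x y.
Proof. unfold rinner; rewrite inner_conj. now destruct (inner x y). Qed.

Lemma rinner_abs_le x y : in_l2 x -> in_l2 y -> Rabs (rinner x y) <= l2norm x * l2norm y.
Proof. apply inner_re_bound. Qed.

Lemma rinner_le x y : in_l2 x -> in_l2 y -> rinner x y <= l2norm x * l2norm y.
Proof. intros. eapply Rle_trans; [apply Rle_abs | now apply rinner_abs_le]. Qed.

Lemma rinner_add_l x y z : in_l2 x -> in_l2 y -> in_l2 z ->
  rinner (vadd x y) z = rinner x z + rinner y z.
Proof. intros; unfold rinner; now rewrite inner_add_l. Qed.

Lemma rinner_sub_l x y z : in_l2 x -> in_l2 y -> in_l2 z ->
  rinner (vsub x y) z = rinner x z - rinner y z.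
Proof. intros; unfold rinner; now rewrite inner_sub_l. Qed.

Lemma rinner_add_r x y z : in_l2 x -> in_l2 y -> in_l2 z ->
  rinner z (vadd x y) = rinner z x + rinner z y.
Proof. intros; unfold rinner; now rewrite inner_add_r. Qed.

Lemma rinner_sub_r x y z : in_l2 x -> in_l2 y -> in_l2 z ->
  rinner z (vsub x y) = rinner z x - rinner z y.
Proof. intros; unfold rinner; now rewrite inner_sub_r. Qed.

Lemma rinner_zero_l u : in_l2 u -> rinner vzero u = 0.
Proof. intros; unfold rinner; now rewrite inner_zero_l. Qed.

Lemma rinner_zero_r u : in_l2 u -> rinner u vzero = 0.
Proof. intros; rewrite rinner_sym; now apply rinner_zero_l. Qed.

Lemma l2norm_add_sq x y : in_l2 x -> in_l2 y ->
  l2norm (vadd x y) ^ 2 = l2norm x ^ 2 + 2 * rinner x y + l2norm y ^ 2.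
Proof.
  intros. assert (in_l2 (vadd x y)) by now apply in_l2_add.
  rewrite <- !rinner_self, rinner_add_l, !rinner_add_r, (rinner_sym x y) by auto. ring.
Qed.

Lemma l2norm_sub_sq x y : in_l2 x -> in_l2 y ->
  l2norm (vsub x y) ^ 2 = l2norm x ^ 2 - 2 * rinner x y + l2norm y ^ 2.
Proof.
  intros. assert (in_l2 (vsub x y)) by now apply in_l2_sub.
  rewrite <- !rinner_self, rinner_sub_l, !rinner_sub_r, (rinner_sym x y) by auto. ring.
Qed.

Lemma l2norm_triangle x y : in_l2 x -> in_l2 y -> l2norm (vadd x y) <= l2norm x + l2norm y.
Proof.
  intros. pose proof (l2norm_nonneg x); pose proof (l2norm_nonneg y).
  apply sq_le_nonneg; [apply l2norm_nonneg | lra|].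
  rewrite l2norm_add_sq by auto. pose proof (rinner_le x y H H0). nra.
Qed.

Lemma l2norm_vsub_le x y : in_l2 x -> in_l2 y -> l2norm (vsub x y) <= l2norm x + l2norm y.
Proof.
  intros. pose proof (l2norm_nonneg x); pose proof (l2norm_nonneg y).
  apply sq_le_nonneg; [apply l2norm_nonneg | lra|].
  rewrite l2norm_sub_sq by auto. pose proof (rinner_abs_le x y H H0) as Hb.
  apply Rabs_le_between in Hb. nra.
Qed.

Lemma l2norm_vsub_triangle x y z : in_l2 x -> in_l2 y -> in_l2 z ->
  l2norm (vsub x z) <= l2norm (vsub x y) + l2norm (vsub y z).
Proof.
  intros. replace (vsub x z) with (vadd (vsub x y) (vsub y z)) by (vext; ring).
  apply l2norm_triangle; now apply in_l2_sub.
Qed.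

Lemma l2norm_vsub_sym x y : in_l2 x -> in_l2 y -> l2norm (vsub x y) = l2norm (vsub y x).
Proof.
  intros. replace (vsub x y) with (vscal (RtoC (-1)) (vsub y x)).
  - rewrite l2norm_vscal, Cmod_R by now apply in_l2_sub.
    rewrite Rabs_left; lra.
  - vext. unfold RtoC. destruct (x x0), (y x0).
    unfold Cmult, Cminus, Cplus, Copp; simpl. f_equal; ring.
Qed.

Section BoundedOp.
Variable T : operator.
Hypothesis HT : is_bounded_op T.

Lemma bounded_in_l2 x : in_l2 x -> in_l2 (T x).
Proof. destruct HT as (H & _); apply H. Qed.

Lemma bounded_add x y : in_l2 x -> in_l2 y -> T (vadd x y) = vadd (T x) (T y).
Proof. destruct HT as (_ & H & _); apply H. Qed.

Lemma bounded_scal a x : in_l2 x -> T (vscal a x) = vscal a (T x).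
Proof. destruct HT as (_ & _ & H & _); apply H. Qed.

Lemma bounded_zero : T vzero = vzero.
Proof.
  rewrite vzero_as_vscal, bounded_scal by apply in_l2_zero. vext. ring.
Qed.

Lemma bounded_sub x y : in_l2 x -> in_l2 y -> T (vsub x y) = vsub (T x) (T y).
Proof.
  intros. rewrite !vsub_as_vadd, bounded_add, bounded_scal; auto. now apply in_l2_scal.
Qed.

Lemma bounded_norm_le : exists M, 0 <= M /\ forall x, in_l2 x -> l2norm (T x) <= M * l2norm x.
Proof.
  destruct HT as (_ & _ & _ & M & HM). exists (Rmax M 0). split; [apply Rmax_r|].
  intros x Hx. eapply Rle_trans; [now apply HM|].
  apply Rmult_le_compat_r; [apply l2norm_nonneg | apply Rmax_l].
Qed.

End BoundedOp.

Lemma bounded_id : is_bounded_op (fun x => x).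
Proof. repeat split; auto. exists 1. intros; lra. Qed.

Lemma bounded_comp A B : is_bounded_op A -> is_bounded_op B -> is_bounded_op (fun x => A (B x)).
Proof.
  intros HA HB. destruct (bounded_norm_le A HA) as (MA & HMA & HA').
  destruct (bounded_norm_le B HB) as (MB & HMB & HB').
  repeat split.
  - intros. now apply (bounded_in_l2 A), (bounded_in_l2 B).
  - intros. rewrite (bounded_add B), (bounded_add A); auto; now apply bounded_in_l2.
  - intros. rewrite (bounded_scal B), (bounded_scal A); auto; now apply bounded_in_l2.
  - exists (MA * MB). intros x Hx. eapply Rle_trans; [apply HA'; now apply bounded_in_l2|].
    rewrite Rmult_assoc. apply Rmult_le_compat_l; auto.
Qed.

Lemma bounded_vadd A B :
  is_bounded_op A -> is_bounded_op B -> is_bounded_op (fun x => vadd (A x) (B x)).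
Proof.
  intros HA HB. destruct (bounded_norm_le A HA) as (MA & HMA & HA').
  destruct (bounded_norm_le B HB) as (MB & HMB & HB').
  repeat split.
  - intros; apply in_l2_add; now apply bounded_in_l2.
  - intros. rewrite (bounded_add B), (bounded_add A); auto. vext. ring.
  - intros. rewrite (bounded_scal B), (bounded_scal A); auto. vext. ring.
  - exists (MA + MB). intros x Hx.
    eapply Rle_trans; [apply l2norm_triangle; now apply bounded_in_l2|].
    pose proof (HA' x Hx); pose proof (HB' x Hx). lra.
Qed.

Lemma bounded_vscal c A : is_bounded_op A -> is_bounded_op (fun x => vscal c (A x)).
Proof.
  intros HA. destruct (bounded_norm_le A HA) as (MA & HMA & HA').
  repeat split.
  - intros; apply in_l2_scal; now apply bounded_in_l2.
  - intros. rewrite (bounded_add A); auto. vext. ring.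
  - intros. rewrite (bounded_scal A); auto. vext. ring.
  - exists (Cmod c * MA). intros x Hx. rewrite l2norm_vscal by now apply bounded_in_l2.
    rewrite Rmult_assoc. apply Rmult_le_compat_l; auto. apply Cmod_ge_0.
Qed.

Lemma bounded_vsub A B :
  is_bounded_op A -> is_bounded_op B -> is_bounded_op (fun x => vsub (A x) (B x)).
Proof.
  intros HA HB.
  replace (fun x => vsub (A x) (B x)) with (fun x => vadd (A x) (vscal (RtoC (-1)) (B x)))
    by (apply functional_extensionality; intro; symmetry; apply vsub_as_vadd).
  now apply bounded_vadd, bounded_vscal.
Qed.

Lemma bounded_rank_one A h :
  is_bounded_op A -> in_l2 h -> is_bounded_op (fun x => vscal (inner (A x) h) h).
Proof.
  intros HA Hh. destruct (bounded_norm_le A HA) as (MA & HMA & HA').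
  repeat split.
  - intros; now apply in_l2_scal.
  - intros x y Hx Hy. rewrite (bounded_add A), inner_add_l by auto using bounded_in_l2.
    vext. ring.
  - intros a x Hx. rewrite (bounded_scal A), inner_scal_l by auto using bounded_in_l2.
    vext. ring.
  - exists (2 * MA * l2norm h * l2norm h). intros x Hx. rewrite l2norm_vscal by auto.
    pose proof (inner_Cmod_bound (A x) h ltac:(now apply bounded_in_l2) Hh). pose proof (HA' x Hx).
    pose proof (l2norm_nonneg h). pose proof (l2norm_nonneg (A x)).
    apply Rle_trans with (2 * (MA * l2norm x * l2norm h) * l2norm h); [|right; ring].
    apply Rmult_le_compat_r; auto. eapply Rle_trans; eauto. apply Rmult_le_compat_l; [lra|].
    now apply Rmult_le_compat_r.
Qed.

Lemma rinner_adjoint T S x y :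
  is_adjoint T S -> in_l2 x -> in_l2 y -> rinner (T x) y = rinner x (S y).
Proof. intros H ? ?; unfold rinner; now rewrite H. Qed.

Section OrthProj.
Variable P : operator.
Hypothesis HP : is_orth_proj P.

Lemma proj_bounded : is_bounded_op P.
Proof. destruct HP as (H & _); exact H. Qed.

Lemma proj_idem x : in_l2 x -> P (P x) = P x.
Proof. destruct HP as (_ & H & _); apply H. Qed.

Lemma proj_selfadjoint : is_adjoint P P.
Proof. destruct HP as (_ & _ & H); exact H. Qed.

Lemma proj_in_l2 x : in_l2 x -> in_l2 (P x).
Proof. apply bounded_in_l2, proj_bounded. Qed.

Lemma proj_norm_le x : in_l2 x -> l2norm (P x) <= l2norm x.
Proof.
  intros Hx. pose proof (proj_in_l2 x Hx).
  apply le_of_sq_le_mul; [apply l2norm_nonneg|].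
  rewrite <- rinner_self, (rinner_adjoint P P), proj_idem by (auto; apply proj_selfadjoint).
  rewrite Rmult_comm. now apply rinner_le.
Qed.

Lemma range_in_l2 v : range P v -> in_l2 v.
Proof. intros (x & Hx & ->). now apply proj_in_l2. Qed.

Lemma range_fixed v : range P v -> P v = v.
Proof. intros (x & Hx & ->). now apply proj_idem. Qed.

Lemma range_of x : in_l2 x -> range P (P x).
Proof. intros; now exists x. Qed.

Lemma proj_nearest u w : in_l2 u -> range P w -> l2norm (vsub u (P u)) <= l2norm (vsub u w).
Proof.
  intros Hu Hw. pose proof (range_in_l2 w Hw). pose proof (proj_in_l2 u Hu).
  assert (E : vsub (P u) w = P (vsub u w))
    by (rewrite (bounded_sub P proj_bounded), (range_fixed w Hw) by auto; reflexivity).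
  assert (Horth : rinner (vsub u (P u)) (vsub (P u) w) = 0).
  { rewrite E, <- (rinner_adjoint P P) by (auto using proj_selfadjoint, in_l2_sub).
    rewrite (bounded_sub P proj_bounded), proj_idem, vsub_diag by auto.
    now apply rinner_zero_l, in_l2_sub. }
  apply sq_le_nonneg; try apply l2norm_nonneg.
  replace (vsub u w) with (vadd (vsub u (P u)) (vsub (P u) w)) by (vext; ring).
  rewrite l2norm_add_sq, Horth by now apply in_l2_sub.
  pose proof (pow2_ge_0 (l2norm (vsub (P u) w))). lra.
Qed.

End OrthProj.

Section ClosedSubspace.
Variable M : subspace.
Hypothesis HM : is_closed_subspace M.

Lemma csub_in_l2 v : M v -> in_l2 v.
Proof. destruct HM as (H & _); apply H. Qed.

Lemma csub_zero : M vzero.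
Proof. destruct HM as (_ & H & _); exact H. Qed.

Lemma csub_add v w : M v -> M w -> M (vadd v w).
Proof. destruct HM as (_ & _ & H & _); apply H. Qed.

Lemma csub_scal a v : M v -> M (vscal a v).
Proof. destruct HM as (_ & _ & _ & H & _); apply H. Qed.

Lemma csub_sub v w : M v -> M w -> M (vsub v w).
Proof. intros. rewrite vsub_as_vadd. now apply csub_add, csub_scal. Qed.

Lemma csub_closed v : in_l2 v ->
  (forall eps, 0 < eps -> exists w, M w /\ l2norm (vsub v w) < eps) -> M v.
Proof. destruct HM as (_ & _ & _ & _ & H); apply H. Qed.

End ClosedSubspace.

Lemma csub_ext (A B : subspace) :
  (forall v, A v <-> B v) -> is_closed_subspace A -> is_closed_subspace B.
Proof.
  intros H HA. repeat split.
  - intros v Hv. apply H in Hv. now apply (csub_in_l2 A).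
  - apply H, csub_zero; auto.
  - intros v w Hv Hw. apply H. apply H in Hv, Hw. now apply csub_add.
  - intros a v Hv. apply H. apply H in Hv. now apply csub_scal.
  - intros v Hv Happ. apply H, csub_closed; auto. intros eps Heps.
    destruct (Happ eps Heps) as (w & Hw & Hd). exists w; split; auto. now apply H.
Qed.

Lemma range_closed_subspace P : is_orth_proj P -> is_closed_subspace (range P).
Proof.
  intros HP. pose proof (proj_bounded P HP) as HB. repeat split.
  - apply (range_in_l2 P HP).
  - exists vzero. split; [apply in_l2_zero | now rewrite bounded_zero].
  - intros v w (x & Hx & ->) (y & Hy & ->). exists (vadd x y).
    split; [now apply in_l2_add | now rewrite bounded_add].
  - intros a v (x & Hx & ->). exists (vscal a x). split; [now apply in_l2_scal | now rewrite bounded_scal].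
  - intros v Hv Happ. exists v. split; auto. symmetry. apply vsub_eq0, l2norm_eq0.
    { apply in_l2_sub; auto. now apply proj_in_l2. }
    (* [P] is 1-Lipschitz and fixes the approximants, so [P v] is as close to [v] as they are. *)
    apply (eq0_of_small _ 2); [lra|]. intros eps Heps. destruct (Happ eps Heps) as (w & Hw & Hvw).
    pose proof (range_in_l2 P HP w Hw).
    rewrite Rabs_pos_eq by apply l2norm_nonneg.
    eapply Rle_trans; [apply (l2norm_vsub_triangle _ (P w)); auto using proj_in_l2|].
    rewrite <- (bounded_sub P HB), (range_fixed P HP w Hw) by auto.
    pose proof (proj_norm_le P HP (vsub v w) ltac:(now apply in_l2_sub)).
    rewrite (l2norm_vsub_sym w v) by auto. lra.
Qed.

Lemma inv_INR_S_small e : 0 < e -> exists N, forall n, (N <= n)%nat -> / INR (S n) < e.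
Proof.
  intros He. destruct (archimed_cor1 e He) as (N & HN & HN0). exists N. intros n Hn.
  eapply Rle_lt_trans; [|exact HN].
  apply Rinv_le_contravar; [apply lt_0_INR; lia | apply le_INR; lia].
Qed.

Lemma C_cauchy_limit (cc : nat -> C) :
  (forall e, 0 < e -> exists N, forall n m, (N <= n)%nat -> (N <= m)%nat ->
                     Cmod (Cminus (cc n) (cc m)) < e) ->
  exists c, forall e, 0 < e -> exists N, forall n, (N <= n)%nat -> Cmod (Cminus (cc n) c) < e.
Proof.
  intros Hc.
  assert (Hcomp : forall pr : C -> R, (forall w, Rabs (pr w) <= Cmod w) ->
                  (forall a b, pr (Cminus a b) = pr a - pr b) -> Cauchy_crit (fun n => pr (cc n))).
  { intros pr Hpr Hsub e He. destruct (Hc e He) as (N & HN). exists N. intros n m Hn Hm.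
    unfold Rdist. rewrite <- Hsub. eapply Rle_lt_trans; [apply Hpr | now apply HN]. }
  destruct (Rcomplete.R_complete _ (Hcomp fst re_le_Cmod ltac:(intros [] []; simpl; ring))) as (a & Ha).
  destruct (Rcomplete.R_complete _ (Hcomp snd Im_le_Cmod ltac:(intros [] []; simpl; ring))) as (b & Hb).
  exists (a, b). intros e He.
  destruct (Ha (e / 2) ltac:(lra)) as (N1 & HN1). destruct (Hb (e / 2) ltac:(lra)) as (N2 & HN2).
  exists (Nat.max N1 N2). intros n Hn.
  specialize (HN1 n ltac:(lia)). specialize (HN2 n ltac:(lia)). unfold Rdist in HN1, HN2.
  eapply Rle_lt_trans; [apply Cmod_le_abs_sum|]. destruct (cc n) as [p q].
  simpl in HN1, HN2 |- *. unfold Rminus in HN1, HN2. lra.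
Qed.

(** * Adding finitely many vectors to a closed subspace *)

Definition add_line (M : subspace) (z : vec) : subspace :=
  fun v => exists c, M (vsub v (vscal c z)).

Section AddLine.
Variable M : subspace.
Hypothesis HM : is_closed_subspace M.
Variable z : vec.
Hypothesis Hz : in_l2 z.
Hypothesis Hnz : ~ M z.

Lemma add_line_lower_bound :
  exists delta, 0 < delta /\ forall m c, M m -> delta * Cmod c <= l2norm (vadd m (vscal c z)).
Proof.
  (* [z] lies at positive distance [eps] from the closed [M]; rescale by [c]. *)
  assert (Hex : exists eps, 0 < eps /\ forall w, M w -> eps <= l2norm (vsub z w)).
  { apply NNPP. intro Hn. apply Hnz, csub_closed; auto. intros eps Heps.
    apply NNPP. intro Hn2. apply Hn. exists eps. split; auto. intros w Hw.
    apply Rnot_lt_le. intro Hlt. apply Hn2. eauto. }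
  destruct Hex as (eps & Heps & Hd). exists eps. split; auto.
  intros m c Hm. pose proof (csub_in_l2 M HM m Hm).
  destruct (classic (c = RtoC 0)) as [-> | Hc].
  - rewrite Cmod_0, Rmult_0_r. apply l2norm_nonneg.
  - set (w := vscal (Copp (Cinv c)) m).
    assert (Hw : M w) by now apply csub_scal.
    replace (vadd m (vscal c z)) with (vscal c (vsub z w)) by (unfold w; vext; field; auto).
    rewrite l2norm_vscal by (apply in_l2_sub; auto; now apply (csub_in_l2 M)).
    specialize (Hd w Hw). pose proof (Cmod_ge_0 c). nra.
Qed.

Lemma add_line_in_l2 v : add_line M z v -> in_l2 v.
Proof.
  intros (c & Hc). replace v with (vadd (vsub v (vscal c z)) (vscal c z)) by (vext; ring).
  apply in_l2_add; [now apply (csub_in_l2 M) | now apply in_l2_scal].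
Qed.

(* The lower bound makes the coefficient of [z] along an approximating sequence Cauchy. *)
Lemma add_line_closed_limit v : in_l2 v ->
  (forall eps, 0 < eps -> exists w, add_line M z w /\ l2norm (vsub v w) < eps) -> add_line M z v.
Proof.
  intros Hv Happ. destruct add_line_lower_bound as (delta & Hdelta & Hdel).
  destruct (choice (fun n (p : vec * C) => M (vsub (fst p) (vscal (snd p) z)) /\
                                          l2norm (vsub v (fst p)) < / INR (S n))) as (f & Hf).
  { intros n. destruct (Happ (/ INR (S n))) as (w & (c & Hc) & Hd); [apply Rinv_0_lt_compat, lt_0_INR; lia|].
    now exists (w, c). }
  set (W := fun n => fst (f n)). set (cc := fun n => snd (f n)).
  assert (HWM : forall n, M (vsub (W n) (vscal (cc n) z))) by apply Hf.
  assert (HWd : forall n, l2norm (vsub v (W n)) < / INR (S n)) by apply Hf.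
  assert (HWl : forall n, in_l2 (W n)) by (intros n; apply add_line_in_l2; now exists (cc n)).
  destruct (C_cauchy_limit cc) as (c & Hc).
  { intros e He. destruct (inv_INR_S_small (e * delta / 2)) as (N & HN); [apply Rdiv_lt_0_compat; nra|].
    exists N. intros n m Hn Hm. apply Rmult_lt_reg_l with delta; auto.
    eapply Rle_lt_trans; [apply (Hdel _ (Cminus (cc n) (cc m)) (csub_sub M HM _ _ (HWM n) (HWM m)))|].
    replace (vadd (vsub (vsub (W n) (vscal (cc n) z)) (vsub (W m) (vscal (cc m) z)))
                  (vscal (Cminus (cc n) (cc m)) z)) with (vsub (W n) (W m)) by (vext; ring).
    eapply Rle_lt_trans; [apply (l2norm_vsub_triangle _ v); auto|]. rewrite l2norm_vsub_sym by auto.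
    pose proof (HWd n); pose proof (HWd m); pose proof (HN n Hn); pose proof (HN m Hm). lra. }
  exists c. apply csub_closed; auto; [apply in_l2_sub; auto; now apply in_l2_scal|].
  intros eps Heps. pose proof (l2norm_nonneg z) as Hz0.
  destruct (inv_INR_S_small (eps / 2)) as (N1 & HN1); [lra|].
  destruct (Hc (eps / (2 * (l2norm z + 1)))) as (N2 & HN2); [apply Rdiv_lt_0_compat; lra|].
  set (n := Nat.max N1 N2). specialize (HN1 n ltac:(lia)). specialize (HN2 n ltac:(lia)).
  exists (vsub (W n) (vscal (cc n) z)). split; auto.
  replace (vsub (vsub v (vscal c z)) (vsub (W n) (vscal (cc n) z)))
    with (vadd (vsub v (W n)) (vscal (Cminus (cc n) c) z)) by (vext; ring).
  eapply Rle_lt_trans; [apply l2norm_triangle; [now apply in_l2_sub | now apply in_l2_scal]|].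
  rewrite l2norm_vscal by auto.
  assert (Cmod (Cminus (cc n) c) * l2norm z <= eps / 2).
  { apply Rle_trans with (eps / (2 * (l2norm z + 1)) * (l2norm z + 1)); [|right; field; lra].
    apply Rmult_le_compat; try lra; apply Cmod_ge_0. }
  pose proof (HWd n). lra.
Qed.

Lemma add_line_closed : is_closed_subspace (add_line M z).
Proof.
  repeat split.
  - apply add_line_in_l2.
  - exists (RtoC 0). rewrite vsub_vscal_0. now apply csub_zero.
  - intros v w (c1 & H1) (c2 & H2). exists (Cplus c1 c2).
    replace (vsub (vadd v w) (vscal (Cplus c1 c2) z))
      with (vadd (vsub v (vscal c1 z)) (vsub w (vscal c2 z))) by (vext; ring).
    now apply csub_add.
  - intros a v (c & H). exists (Cmult a c).
    replace (vsub (vscal a v) (vscal (Cmult a c) z)) with (vscal a (vsub v (vscal c z))) by (vext; ring).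
    now apply csub_scal.
  - apply add_line_closed_limit.
Qed.

End AddLine.

Lemma add_line_of_mem M z : is_closed_subspace M -> M z -> forall v, add_line M z v <-> M v.
Proof.
  intros HM Hz v. split.
  - intros (c & Hc). replace v with (vadd (vsub v (vscal c z)) (vscal c z)) by (vext; ring).
    now apply csub_add, csub_scal.
  - intros Hv. exists (RtoC 0). now rewrite vsub_vscal_0.
Qed.

Fixpoint add_lines (E0 : subspace) (l : list vec) : subspace :=
  match l with
  | [] => E0
  | z :: l' => add_line (add_lines E0 l') z
  end.

Lemma add_lines_closed E0 l : is_closed_subspace E0 -> (forall u, In u l -> in_l2 u) ->
  is_closed_subspace (add_lines E0 l).
Proof.
  intros H0. induction l as [|z l' IH]; intros Hl; simpl; auto.
  assert (HN : is_closed_subspace (add_lines E0 l')) by (apply IH; intros; apply Hl; now right).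
  destruct (classic (add_lines E0 l' z)) as [Hz | Hz].
  - apply (csub_ext (add_lines E0 l')); auto. intros v. symmetry. now apply add_line_of_mem.
  - apply add_line_closed; auto. apply Hl; now left.
Qed.

Lemma add_lines_base E0 l v : E0 v -> add_lines E0 l v.
Proof. induction l; simpl; auto. intros; exists (RtoC 0). rewrite vsub_vscal_0; auto. Qed.

Lemma add_lines_add_scal E0 l u c w :
  In u l -> add_lines E0 l w -> add_lines E0 l (vadd w (vscal c u)).
Proof.
  revert w. induction l as [|z l' IH]; intros w Hu Hw; simpl in *; [destruct Hu|].
  destruct Hw as (c0 & Hc0). destruct Hu as [<- | Hu].
  - exists (Cplus c0 c).
    now replace (vsub (vadd w (vscal c z)) (vscal (Cplus c0 c) z)) with (vsub w (vscal c0 z))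
      by (vext; ring).
  - exists c0.
    replace (vsub (vadd w (vscal c u)) (vscal c0 z)) with (vadd (vsub w (vscal c0 z)) (vscal c u))
      by (vext; ring).
    now apply IH.
Qed.

Lemma add_lines_add_lincomb E0 l cs w : (forall p, In p cs -> In (snd p) l) ->
  add_lines E0 l w -> add_lines E0 l (vadd w (lincomb cs)).
Proof.
  revert w. induction cs as [|[a u] cs IH]; intros w Hcs Hw; simpl.
  - now replace (vadd w vzero) with w by (vext; ring).
  - replace (vadd w (vadd (vscal a u) (lincomb cs))) with (vadd (vadd w (vscal a u)) (lincomb cs))
      by (vext; ring).
    apply IH; [intros; apply Hcs; now right|].
    apply add_lines_add_scal; auto. apply (Hcs (a, u)); now left.
Qed.

Lemma add_lines_sub E0 X l : is_closed_subspace X -> (forall v, E0 v -> X v) ->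
  (forall u, In u l -> X u) -> forall v, add_lines E0 l v -> X v.
Proof.
  intros HX H0. induction l as [|z l' IH]; intros Hl v; simpl; auto.
  intros (c & Hc). replace v with (vadd (vsub v (vscal c z)) (vscal c z)) by (vext; ring).
  apply csub_add, csub_scal; auto; [apply IH; auto; intros; apply Hl; now right | apply Hl; now left].
Qed.

Lemma finite_codim_add_lines E0 X : is_closed_subspace X -> (forall v, E0 v -> X v) ->
  finite_codim_in E0 X -> exists l, (forall u, In u l -> X u) /\ forall v, X v <-> add_lines E0 l v.
Proof.
  intros HX H0 (l & Hl & Hd). exists l. split; auto. intros v. split.
  - intros Hv. destruct (Hd v Hv) as (cs & Hcs & HE).
    replace v with (vadd (vsub v (lincomb cs)) (lincomb cs)) by (vext; ring).
    now apply add_lines_add_lincomb, add_lines_base.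
  - now apply add_lines_sub.
Qed.

Lemma finite_codim_mono (A A' E : subspace) :
  (forall v, A v -> A' v) -> finite_codim_in A E -> finite_codim_in A' E.
Proof.
  intros H (l & Hl & Hd). exists l. split; auto. intros v Hv.
  destruct (Hd v Hv) as (cs & Hcs & HA). eauto.
Qed.

(* If [g] vanishes on [E1] the list is unchanged; otherwise some [z] of [E1] with [g z <> 0]
   joins it. *)
Lemma finite_codim_kernel (E E1 : subspace) (g : vec -> C) :
  finite_codim_in E1 E -> (forall v, E1 v -> E v) ->
  (forall v w, E1 v -> E1 w -> E1 (vadd v w)) -> (forall a v, E1 v -> E1 (vscal a v)) ->
  (forall v w, E1 v -> E1 w -> g (vadd v w) = Cplus (g v) (g w)) ->
  (forall a v, E1 v -> g (vscal a v) = Cmult a (g v)) ->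
  finite_codim_in (fun v => E1 v /\ g v = RtoC 0) E.
Proof.
  intros (l & Hl & Hd) HE1E Hadd Hscal Hgadd Hgscal.
  destruct (classic (exists z, E1 z /\ g z <> RtoC 0)) as [(z & Hz & Hgz) | Hno].
  - exists (z :: l). split; [intros u [<- | Hu]; auto|].
    intros v Hv. destruct (Hd v Hv) as (cs & Hcs & Hr).
    set (r := vsub v (lincomb cs)) in *.
    exists ((Cdiv (g r) (g z), z) :: cs). split; [intros p [<- | Hp]; simpl; auto|].
    replace (vsub v (lincomb ((Cdiv (g r) (g z), z) :: cs)))
      with (vadd r (vscal (Copp (Cdiv (g r) (g z))) z)) by (simpl; unfold r; vext; ring).
    split; [now apply Hadd, Hscal|].
    rewrite Hgadd, Hgscal by auto. field. auto.
  - exists l. split; auto. intros v Hv. destruct (Hd v Hv) as (cs & Hcs & Hr).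
    exists cs. repeat split; auto. apply NNPP; intro Hn. apply Hno. eauto.
Qed.

(** * The Riesz representation of a bounded functional *)

Fixpoint sum_lt (a : nat -> R) (N : nat) : R :=
  match N with O => 0 | S N' => sum_lt a N' + a N' end.

Fixpoint csum_lt (a : nat -> C) (N : nat) : C :=
  match N with O => RtoC 0 | S N' => Cplus (csum_lt a N') (a N') end.

Lemma sum_f_R0_sum_lt a n : sum_f_R0 a n = sum_lt a (S n).
Proof. induction n; simpl in *; [ring | rewrite IHn; ring]. Qed.

Lemma sum_lt_ext a b N : (forall k, (k < N)%nat -> a k = b k) -> sum_lt a N = sum_lt b N.
Proof. induction N; intros H; simpl; auto. rewrite IHN, H; auto. Qed.

Lemma fst_csum_lt a N : fst (csum_lt a N) = sum_lt (fun k => fst (a k)) N.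
Proof. induction N; simpl; auto. now rewrite IHN. Qed.

Lemma snd_csum_lt a N : snd (csum_lt a N) = sum_lt (fun k => snd (a k)) N.
Proof. induction N; simpl; auto. now rewrite IHN. Qed.

Lemma is_series_finite_support a N : (forall k, (N <= k)%nat -> a k = 0) -> is_series a (sum_lt a N).
Proof.
  intros H. apply is_series_Reals. intros eps Heps. exists N. intros n Hn.
  rewrite sum_f_R0_sum_lt. replace (sum_lt a (S n)) with (sum_lt a N).
  - unfold Rdist. rewrite Rminus_eq_0, Rabs_R0. auto.
  - assert (Hle : (N <= S n)%nat) by lia. induction Hle; auto. simpl. rewrite H by lia. rewrite IHHle. ring.
Qed.

Lemma sum_lt_cvg a : ex_series a ->
  forall eps, 0 < eps -> exists N0, forall N, (N0 <= N)%nat -> Rabs (sum_lt a N - Series a) < eps.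
Proof.
  intros Ha eps Heps. pose proof (Series_correct a Ha) as H. apply is_series_Reals in H.
  destruct (H eps Heps) as (N0 & HN0). exists (S N0). intros N HN. destruct N; [lia|].
  rewrite <- sum_f_R0_sum_lt. apply HN0. lia.
Qed.

Definition ebasis (n : nat) : vec := fun k => if Nat.eqb k n then RtoC 1 else RtoC 0.
Definition trunc (N : nat) (x : vec) : vec := fun k => if Nat.ltb k N then x k else RtoC 0.

Lemma trunc_S N x : trunc (S N) x = vadd (trunc N x) (vscal (x N) (ebasis N)).
Proof.
  apply functional_extensionality; intro k. unfold trunc, vadd, vscal, ebasis.
  destruct (Nat.ltb_spec k (S N)), (Nat.ltb_spec k N), (Nat.eqb_spec k N); subst; try lia; ring.
Qed.

Lemma finite_support_l2 x N : (forall k, (N <= k)%nat -> x k = RtoC 0) ->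
  in_l2 x /\ l2norm x ^ 2 = sum_lt (sqmod x) N.
Proof.
  intros H. assert (H0 : forall k, (N <= k)%nat -> sqmod x k = 0).
  { intros k Hk. unfold sqmod. rewrite H, Cmod_0 by auto. ring. }
  pose proof (is_series_finite_support _ _ H0) as Hs.
  assert (Hx : in_l2 x) by (eexists; eauto).
  split; auto. rewrite l2norm_sq by auto. now apply is_series_unique.
Qed.

Lemma trunc_support N x k : (N <= k)%nat -> trunc N x k = RtoC 0.
Proof. intros Hk. unfold trunc. destruct (Nat.ltb_spec k N); auto; lia. Qed.

Lemma ebasis_l2 n : in_l2 (ebasis n).
Proof.
  apply (finite_support_l2 _ (S n)). intros k Hk. unfold ebasis. destruct (Nat.eqb_spec k n); auto; lia.
Qed.

Lemma trunc_l2 N x : in_l2 (trunc N x).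
Proof. apply (finite_support_l2 _ N), trunc_support. Qed.

Lemma trunc_norm_sq N x : l2norm (trunc N x) ^ 2 = sum_lt (sqmod x) N.
Proof.
  rewrite (proj2 (finite_support_l2 (trunc N x) N (trunc_support N x))).
  apply sum_lt_ext. intros k Hk. unfold sqmod, trunc. destruct (Nat.ltb_spec k N); auto; lia.
Qed.

Lemma tail_norm_sq N x : in_l2 x -> l2norm (vsub x (trunc N x)) ^ 2 = Series (sqmod x) - sum_lt (sqmod x) N.
Proof.
  intros Hx. assert (Hl : in_l2 (vsub x (trunc N x))) by (apply in_l2_sub; auto; apply trunc_l2).
  rewrite <- trunc_norm_sq, !l2norm_sq by (auto; apply trunc_l2).
  rewrite <- Series_minus by (auto; apply trunc_l2). apply Series_ext. intros k.
  unfold sqmod, vsub, trunc. destruct (Nat.ltb_spec k N).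
  - replace (Cminus (x k) (x k)) with (RtoC 0) by ring. rewrite Cmod_0. ring.
  - replace (Cminus (x k) (RtoC 0)) with (x k) by ring. rewrite Cmod_0. ring.
Qed.

Section Riesz.
Variable Phi : vec -> C.
Variable M : R.
Hypothesis HM : 0 <= M.
Hypothesis Hadd : forall x y, in_l2 x -> in_l2 y -> Phi (vadd x y) = Cplus (Phi x) (Phi y).
Hypothesis Hscal : forall a x, in_l2 x -> Phi (vscal a x) = Cmult a (Phi x).
Hypothesis Hbd : forall x, in_l2 x -> Cmod (Phi x) <= M * l2norm x.

Lemma functional_sub x y : in_l2 x -> in_l2 y -> Phi (vsub x y) = Cminus (Phi x) (Phi y).
Proof. intros. rewrite vsub_as_vadd, Hadd, Hscal by (auto; now apply in_l2_scal). ring. Qed.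

Lemma functional_trunc N x : Phi (trunc N x) = csum_lt (fun k => Cmult (x k) (Phi (ebasis k))) N.
Proof.
  induction N.
  - change (trunc 0 x) with vzero. rewrite vzero_as_vscal, Hscal by apply in_l2_zero. simpl; ring.
  - rewrite trunc_S, Hadd, Hscal, IHN by (apply trunc_l2 || apply in_l2_scal || idtac; apply ebasis_l2).
    reflexivity.
Qed.

Definition riesz_vec (k : nat) : C := Cconj (Phi (ebasis k)).

Lemma fst_functional_trunc N x : fst (Phi (trunc N x)) = sum_lt (re_term x riesz_vec) N.
Proof.
  rewrite functional_trunc, fst_csum_lt. apply sum_lt_ext. intros.
  unfold re_term, riesz_vec. now rewrite Cconj_conj.
Qed.

Lemma snd_functional_trunc N x : snd (Phi (trunc N x)) = sum_lt (im_term x riesz_vec) N.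
Proof.
  rewrite functional_trunc, snd_csum_lt. apply sum_lt_ext. intros.
  unfold im_term, riesz_vec. now rewrite Cconj_conj.
Qed.

(* The partial sums of [|y_k|^2] are [Phi] of the truncations of [y] itself, hence bounded by
   [M ^ 2]. *)
Lemma riesz_vec_l2 : in_l2 riesz_vec.
Proof.
  assert (Hb : forall N, sum_lt (sqmod riesz_vec) N <= M ^ 2).
  { intros N. set (S := sum_lt (sqmod riesz_vec) N).
    assert (HS : S <= M * l2norm (trunc N riesz_vec)).
    { replace S with (fst (Phi (trunc N riesz_vec))).
      - eapply Rle_trans; [apply Rle_abs|]. eapply Rle_trans; [apply re_le_Cmod|]. apply Hbd, trunc_l2.
      - rewrite fst_functional_trunc. apply sum_lt_ext. intros k _.
        rewrite sqmod_alt. unfold re_term. destruct (riesz_vec k). simpl. ring. }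
    pose proof (trunc_norm_sq N riesz_vec) as HT. fold S in HT.
    pose proof (l2norm_nonneg (trunc N riesz_vec)).
    assert (l2norm (trunc N riesz_vec) <= M) by nra.
    rewrite <- HT. apply pow_incr; auto. }
  destruct (growing_cv (sum_f_R0 (sqmod riesz_vec))) as (l & Hl).
  - intros n. simpl. pose proof (sqmod_nonneg riesz_vec (S n)). lra.
  - exists (M ^ 2). intros r (i & ->). rewrite sum_f_R0_sum_lt. apply Hb.
  - exists l. now apply is_series_Reals.
Qed.

Lemma functional_component (pr : C -> R) (s : nat -> R) x : in_l2 x ->
  (forall z, Rabs (pr z) <= Cmod z) -> (forall z w, pr (Cminus z w) = pr z - pr w) ->
  (forall N, pr (Phi (trunc N x)) = sum_lt s N) -> ex_series s ->
  pr (Phi x) = Series s.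
Proof.
  intros Hx Hpr Hprsub Htr Hs.
  apply Rminus_diag_uniq, (eq0_of_small _ 2); [lra|]. intros eps Heps.
  destruct (sum_lt_cvg s Hs eps Heps) as (N1 & HN1).
  set (t := eps / (M + 1)).
  assert (Ht : 0 < t) by (apply Rdiv_lt_0_compat; lra).
  destruct (sum_lt_cvg (sqmod x) Hx (t ^ 2) ltac:(now apply pow_lt)) as (N2 & HN2).
  set (N := Nat.max N1 N2). specialize (HN1 N ltac:(lia)). specialize (HN2 N ltac:(lia)).
  assert (Htail : l2norm (vsub x (trunc N x)) <= t).
  { apply sq_le_nonneg; [apply l2norm_nonneg | lra|].
    rewrite tail_norm_sq by auto. apply Rabs_lt_between in HN2. lra. }
  assert (Hd : Rabs (pr (Phi x) - sum_lt s N) <= M * t).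
  { rewrite <- Htr, <- Hprsub, <- functional_sub by (auto; apply trunc_l2).
    eapply Rle_trans; [apply Hpr|]. eapply Rle_trans; [apply Hbd, in_l2_sub; auto; apply trunc_l2|].
    now apply Rmult_le_compat_l. }
  assert (M * t <= eps).
  { unfold t. replace (M * (eps / (M + 1))) with (eps * (M / (M + 1))) by (field; lra).
    assert (M / (M + 1) <= 1) by (apply Rmult_le_reg_r with (M + 1); [lra | field_simplify; lra]).
    nra. }
  apply Rabs_le_between in Hd. apply Rabs_lt_between in HN1. apply Rabs_le. lra.
Qed.

Lemma riesz : exists y, in_l2 y /\ forall x, in_l2 x -> Phi x = inner x y.
Proof.
  exists riesz_vec. split; [apply riesz_vec_l2|]. intros x Hx.
  rewrite inner_eq. destruct (Phi x) as [p q] eqn:E. f_equal.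
  - change p with (fst (p, q)). rewrite <- E.
    apply (functional_component fst (re_term x riesz_vec)); auto using re_le_Cmod, fst_functional_trunc.
    apply ex_series_re_term; auto using riesz_vec_l2.
  - change q with (snd (p, q)). rewrite <- E.
    apply (functional_component snd (im_term x riesz_vec)); auto using Im_le_Cmod, snd_functional_trunc.
    apply ex_series_im_term; auto using riesz_vec_l2.
Qed.

End Riesz.

(* [is_compact_op K] asks this of [K] for every [e > 0]. *)
Definition has_finite_net (A : operator) (e : R) : Prop :=
  exists l : list vec, (forall u, In u l -> in_l2 u) /\
    forall x, in_l2 x -> l2norm x <= 1 -> exists u, In u l /\ l2norm (vsub (A x) u) < e.

Lemma has_finite_net_ext A B e : (forall x, in_l2 x -> A x = B x) -> has_finite_net A e -> has_finite_net B e.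
Proof.
  intros H (l & Hl & Hn). exists l; split; auto. intros x Hx Hx1.
  destruct (Hn x Hx Hx1) as (u & Hu & Hd). exists u; split; auto. now rewrite <- H.
Qed.

Lemma has_finite_net_small A e e' :
  (forall x, in_l2 x -> l2norm x <= 1 -> l2norm (A x) <= e) -> e < e' -> has_finite_net A e'.
Proof.
  intros H He. exists [vzero]. split; [intros u [<- | []]; apply in_l2_zero|].
  intros x Hx Hx1. exists vzero. split; [now left|]. rewrite vsub_0_r. specialize (H x Hx Hx1). lra.
Qed.

Lemma has_finite_net_add A B e1 e2 :
  (forall x, in_l2 x -> in_l2 (A x)) -> (forall x, in_l2 x -> in_l2 (B x)) ->
  has_finite_net A e1 -> has_finite_net B e2 -> has_finite_net (fun x => vadd (A x) (B x)) (e1 + e2).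
Proof.
  intros HA HB (l1 & Hl1 & Hn1) (l2 & Hl2 & Hn2).
  exists (flat_map (fun u => map (fun v => vadd u v) l2) l1). split.
  - intros w Hw. apply in_flat_map in Hw. destruct Hw as (u & Hu & Hw). apply in_map_iff in Hw.
    destruct Hw as (v & <- & Hv). now apply in_l2_add; auto.
  - intros x Hx Hx1. destruct (Hn1 x Hx Hx1) as (u & Hu & Hd1). destruct (Hn2 x Hx Hx1) as (v & Hv & Hd2).
    exists (vadd u v). split.
    + apply in_flat_map. exists u. split; auto. apply in_map_iff. now exists v.
    + replace (vsub (vadd (A x) (B x)) (vadd u v)) with (vadd (vsub (A x) u) (vsub (B x) v)) by (vext; ring).
      eapply Rle_lt_trans; [apply l2norm_triangle; apply in_l2_sub; auto|]. lra.
Qed.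

Lemma has_finite_net_opp A e : (forall x, in_l2 x -> in_l2 (A x)) ->
  has_finite_net A e -> has_finite_net (fun x => vscal (RtoC (-1)) (A x)) e.
Proof.
  intros HA (l & Hl & Hn). exists (map (vscal (RtoC (-1))) l). split.
  - intros w Hw. apply in_map_iff in Hw. destruct Hw as (u & <- & Hu). now apply in_l2_scal; auto.
  - intros x Hx Hx1. destruct (Hn x Hx Hx1) as (u & Hu & Hd). exists (vscal (RtoC (-1)) u).
    split; [now apply in_map|].
    replace (vsub (vscal (RtoC (-1)) (A x)) (vscal (RtoC (-1)) u)) with (vscal (RtoC (-1)) (vsub (A x) u))
      by (vext; ring).
    rewrite l2norm_vscal, Cmod_R by (apply in_l2_sub; auto). rewrite Rabs_left; lra.
Qed.

Lemma finite_grid Rb s : 0 < s -> exists G : list R,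
  forall a, Rabs a <= Rb -> exists p, In p G /\ Rabs (a - p) <= s.
Proof.
  intros Hs. destruct (INR_unbounded (2 * Rb / s)) as (n & Hn).
  assert (Hcover : forall m a, -Rb <= a <= -Rb + INR m * s ->
                   exists k, (k <= m)%nat /\ Rabs (a - (-Rb + INR k * s)) <= s).
  { induction m; intros a Ha.
    - exists 0%nat. split; auto. simpl in *. apply Rabs_le. lra.
    - destruct (Rle_dec a (-Rb + INR m * s)) as [Hle | Hgt].
      + destruct (IHm a) as (k & Hk & Hd); [lra|]. exists k; split; auto.
      + exists (S m). split; auto. rewrite S_INR in *. apply Rabs_le. lra. }
  exists (map (fun k => -Rb + INR k * s) (seq 0 (S n))).
  intros a Ha. apply Rabs_le_between in Ha.
  destruct (Hcover n a) as (k & Hk & Hd).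
  { assert (2 * Rb <= INR n * s).
    { apply Rmult_lt_compat_r with (r := s) in Hn; auto.
      unfold Rdiv in Hn. rewrite Rmult_assoc, Rinv_l in Hn by lra. lra. }
    lra. }
  exists (-Rb + INR k * s). split; auto. apply in_map_iff. exists k. split; auto. apply in_seq. lia.
Qed.

Lemma has_finite_net_rank_one (f : vec -> C) g Rb eta : in_l2 g -> 0 < eta ->
  (forall x, in_l2 x -> l2norm x <= 1 -> Rabs (fst (f x)) <= Rb /\ Rabs (snd (f x)) <= Rb) ->
  has_finite_net (fun x => vscal (f x) g) eta.
Proof.
  intros Hg Heta Hf. pose proof (l2norm_nonneg g) as Hg0.
  set (s := eta / (2 * (l2norm g + 1))).
  assert (Hs : 0 < s) by (apply Rdiv_lt_0_compat; lra).
  destruct (finite_grid Rb s Hs) as (G & HG).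
  exists (flat_map (fun p => map (fun q => vscal (p, q) g) G) G). split.
  - intros w Hw. apply in_flat_map in Hw. destruct Hw as (p & Hp & Hw). apply in_map_iff in Hw.
    destruct Hw as (q & <- & Hq). now apply in_l2_scal.
  - intros x Hx Hx1. destruct (Hf x Hx Hx1) as (H1 & H2).
    destruct (HG _ H1) as (p & Hp & Hdp). destruct (HG _ H2) as (q & Hq & Hdq).
    exists (vscal (p, q) g). split.
    + apply in_flat_map. exists p. split; auto. apply in_map_iff. now exists q.
    + replace (vsub (vscal (f x) g) (vscal (p, q) g)) with (vscal (Cminus (f x) (p, q)) g) by (vext; ring).
      rewrite l2norm_vscal by auto.
      assert (Hc : Cmod (Cminus (f x) (p, q)) <= 2 * s).
      { eapply Rle_trans; [apply Cmod_le_abs_sum|].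
        destruct (f x) as [a b]. simpl in *. unfold Rminus in *. lra. }
      assert (2 * s * l2norm g < eta).
      { unfold s. replace (2 * (eta / (2 * (l2norm g + 1))) * l2norm g)
          with (eta * (l2norm g / (l2norm g + 1))) by (field; lra).
        assert (l2norm g / (l2norm g + 1) < 1)
          by (apply Rmult_lt_reg_r with (l2norm g + 1); [lra | field_simplify; lra]).
        nra. }
      pose proof (Cmod_ge_0 (Cminus (f x) (p, q))). nra.
Qed.

(** * From the Calkin order to essential containment *)

Definition annihilated_by (V : subspace) (T : operator) (l : list vec) : subspace :=
  fun v => V v /\ forall u, In u l -> inner (T v) u = RtoC 0.

Section Annihilated.
Variables (V : subspace) (T : operator) (l : list vec).
Hypothesis HV : is_closed_subspace V.
Hypothesis HT : is_bounded_op T.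
Hypothesis Hl : forall u, In u l -> in_l2 u.

Lemma annihilated_in_l2 v : annihilated_by V T l v -> in_l2 v.
Proof. intros (Hv & _). now apply (csub_in_l2 V). Qed.

Lemma annihilated_add v w :
  annihilated_by V T l v -> annihilated_by V T l w -> annihilated_by V T l (vadd v w).
Proof.
  intros Hv Hw. pose proof (annihilated_in_l2 v Hv); pose proof (annihilated_in_l2 w Hw).
  destruct Hv as (Hv1 & Hv2), Hw as (Hw1 & Hw2). split; [now apply csub_add|].
  intros u Hu. rewrite bounded_add, inner_add_l, Hv2, Hw2 by auto using bounded_in_l2. ring.
Qed.

Lemma annihilated_scal a v : annihilated_by V T l v -> annihilated_by V T l (vscal a v).
Proof.
  intros Hv. pose proof (annihilated_in_l2 v Hv). destruct Hv as (Hv1 & Hv2).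
  split; [now apply csub_scal|].
  intros u Hu. rewrite bounded_scal, inner_scal_l, Hv2 by auto using bounded_in_l2. ring.
Qed.

Lemma annihilated_closed : is_closed_subspace (annihilated_by V T l).
Proof.
  destruct (bounded_norm_le T HT) as (MT & HMT & HTb).
  split; [apply annihilated_in_l2|].
  split.
  { split; [now apply csub_zero|]. intros u Hu. rewrite bounded_zero by auto. now apply inner_zero_l, Hl. }
  split; [apply annihilated_add|].
  split; [apply annihilated_scal|].
  intros v Hv Happ. split.
  - apply csub_closed; auto.
    intros eps Heps. destruct (Happ eps Heps) as (w & (Hw & _) & Hd). eauto.
  - intros u Hu. pose proof (Hl u Hu).
    (* [inner (T v) u] differs from [inner (T w) u = 0] by at most [2 MT |v - w| |u|]. *)
    apply Cmod_eq_0, (eq0_of_small _ (2 * MT * l2norm u)).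
    { pose proof (l2norm_nonneg u). nra. }
    intros eps Heps. destruct (Happ eps Heps) as (w & Hw & Hvw).
    pose proof (annihilated_in_l2 w Hw). destruct Hw as (_ & Hw0).
    assert (Hvw2 : in_l2 (vsub v w)) by now apply in_l2_sub.
    replace (inner (T v) u) with (inner (T (vsub v w)) u)
      by (rewrite bounded_sub, inner_sub_l, Hw0 by auto using bounded_in_l2; ring).
    rewrite Rabs_pos_eq by apply Cmod_ge_0.
    eapply Rle_trans; [apply inner_Cmod_bound; auto using bounded_in_l2|].
    pose proof (HTb _ Hvw2). pose proof (l2norm_nonneg u). pose proof (l2norm_nonneg (vsub v w)).
    pose proof (l2norm_nonneg (T (vsub v w))).
    apply Rle_trans with (2 * (MT * l2norm (vsub v w) * l2norm u)).
    + apply Rmult_le_compat_l; [lra|]. now apply Rmult_le_compat_r.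
    + assert (MT * l2norm (vsub v w) <= MT * eps) by (apply Rmult_le_compat_l; lra). nra.
Qed.

End Annihilated.

Lemma annihilated_finite_codim V T l : is_closed_subspace V -> is_bounded_op T ->
  (forall u, In u l -> in_l2 u) -> finite_codim_in (annihilated_by V T l) V.
Proof.
  intros HV HT. induction l as [|a l' IH]; intros Hl.
  - exists []. split; [intros u []|]. intros v Hv. exists []. split; [intros p []|].
    simpl. rewrite vsub_0_r. split; auto. intros u [].
  - assert (Hl' : forall u, In u l' -> in_l2 u) by (intros; apply Hl; now right).
    apply finite_codim_mono with (fun v => annihilated_by V T l' v /\ inner (T v) a = RtoC 0).
    { intros v ((H1 & H2) & H3). split; auto. intros u [<- | Hu]; auto. }
    apply finite_codim_kernel; auto.
    + intros v (Hv & _); auto.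
    + now apply annihilated_add.
    + now apply annihilated_scal.
    + intros v w Hv Hw. pose proof (Hl a (or_introl eq_refl)).
      pose proof (annihilated_in_l2 V T l' HV v Hv). pose proof (annihilated_in_l2 V T l' HV w Hw).
      rewrite bounded_add by auto. apply inner_add_l; auto using bounded_in_l2.
    + intros c v Hv. pose proof (Hl a (or_introl eq_refl)). pose proof (annihilated_in_l2 V T l' HV v Hv).
      rewrite bounded_scal by auto. apply inner_scal_l; auto using bounded_in_l2.
Qed.

Lemma l2norm_le_of_orth y u delta : in_l2 y -> in_l2 u ->
  rinner y u = 0 -> l2norm (vsub y u) < delta -> l2norm y <= delta.
Proof.
  intros Hy Hu Horth Hd. pose proof (l2norm_nonneg (vsub y u)).
  apply le_of_sq_le_mul; [lra|].
  rewrite <- rinner_self by auto.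
  replace (rinner y y) with (rinner y (vsub y u)) by (rewrite rinner_sub_r, Horth by auto; ring).
  eapply Rle_trans; [apply rinner_le; auto; now apply in_l2_sub|].
  apply Rmult_le_compat_l; [apply l2norm_nonneg | lra].
Qed.

Section CalkinToEss.
Variables P Q Cop Cadj K : operator.
Hypothesis HP : is_orth_proj P.
Hypothesis HQ : is_orth_proj Q.
Hypothesis HCop : is_bounded_op Cop.
Hypothesis HCadj : is_bounded_op Cadj.
Hypothesis Hadj : is_adjoint Cop Cadj.
Hypothesis HK : is_bounded_op K.
Hypothesis Hdecomp : forall x, in_l2 x -> vsub (Q x) (P x) = vadd (Cadj (Cop x)) (K x).

Lemma distance_to_range_bound v : in_l2 v -> P v = v ->
  l2norm (vsub v (Q v)) ^ 4 <= l2norm v ^ 2 * (l2norm (K (vsub v (Q v))) * l2norm (vsub v (Q v))).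
Proof.
  intros Hv HPv. pose proof (proj_bounded P HP) as HPb. pose proof (proj_bounded Q HQ) as HQb.
  set (w := vsub v (Q v)).
  assert (HQv : in_l2 (Q v)) by now apply proj_in_l2.
  assert (Hw : in_l2 w) by now apply in_l2_sub.
  assert (HQw : Q w = vzero) by (unfold w; rewrite bounded_sub, proj_idem by auto; apply vsub_diag).
  assert (HPw : in_l2 (P w)) by now apply proj_in_l2.
  assert (HKw : in_l2 (K w)) by now apply bounded_in_l2.
  assert (HCw : in_l2 (Cop w)) by now apply bounded_in_l2.
  assert (HPw_sq : l2norm (P w) ^ 2 <= l2norm (K w) * l2norm w).
  { assert (E : rinner (vsub (Q w) (P w)) w = rinner (vadd (Cadj (Cop w)) (K w)) w) by now rewrite Hdecomp.
    rewrite rinner_sub_l, rinner_add_l, HQw, rinner_zero_l in E by auto using bounded_in_l2, in_l2_zero.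
    rewrite (rinner_sym w (Cadj (Cop w))), <- (rinner_adjoint Cop Cadj), rinner_self in E by auto.
    rewrite <- (proj_idem P HP w), (rinner_adjoint P P), rinner_self in E
      by auto using proj_selfadjoint, proj_in_l2.
    pose proof (rinner_abs_le (K w) w HKw Hw) as Hb. apply Rabs_le_between in Hb.
    pose proof (pow2_ge_0 (l2norm (Cop w))). lra. }
  assert (Hw_sq : l2norm w ^ 2 <= l2norm v * l2norm (P w)).
  { rewrite <- rinner_self by auto. unfold w at 1.
    rewrite rinner_sub_l, (rinner_adjoint Q Q), HQw, rinner_zero_r by auto using proj_selfadjoint.
    rewrite <- HPv at 1. rewrite (rinner_adjoint P P) by auto using proj_selfadjoint.
    rewrite Rminus_0_r. now apply rinner_le. }
  pose proof (l2norm_nonneg w). pose proof (l2norm_nonneg v). pose proof (l2norm_nonneg (P w)).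
  assert (l2norm w ^ 4 <= l2norm v ^ 2 * l2norm (P w) ^ 2).
  { replace (l2norm w ^ 4) with ((l2norm w ^ 2) ^ 2) by ring.
    replace (l2norm v ^ 2 * l2norm (P w) ^ 2) with ((l2norm v * l2norm (P w)) ^ 2) by ring.
    apply pow_incr. split; auto. apply pow2_ge_0. }
  assert (l2norm v ^ 2 * l2norm (P w) ^ 2 <= l2norm v ^ 2 * (l2norm (K w) * l2norm w))
    by (apply Rmult_le_compat_l; auto; apply pow2_ge_0).
  lra.
Qed.

Definition defect : operator := fun y => K (vsub y (Q y)).

Lemma defect_bounded : is_bounded_op defect.
Proof.
  apply (bounded_comp K (fun y => vsub y (Q y))); auto.
  apply bounded_vsub; [apply bounded_id | now apply proj_bounded].
Qed.

Lemma annihilated_unit_near_range l delta :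
  (forall u, In u l -> in_l2 u) ->
  (forall x, in_l2 x -> l2norm x <= 1 -> exists u, In u l /\ l2norm (vsub (K x) u) < delta) ->
  forall v, annihilated_by (range P) defect l v -> l2norm v = 1 -> l2norm (vsub v (Q v)) ^ 4 <= 4 * delta.
Proof.
  intros Hl Hnet v (HvP & Hv0) Hv1.
  pose proof (range_in_l2 P HP v HvP) as Hv. pose proof (proj_in_l2 Q HQ v Hv).
  set (w := vsub v (Q v)).
  assert (Hw : in_l2 w) by now apply in_l2_sub.
  assert (Hw2 : l2norm w <= 2).
  { eapply Rle_trans; [apply l2norm_vsub_le; auto|]. pose proof (proj_norm_le Q HQ v Hv). lra. }
  assert (HKw : l2norm (K w) <= 2 * delta).
  { (* The half of [w] lies in the unit ball; its image is orthogonal to the nearby net point. *)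
    set (x := vscal (RtoC (/ 2)) w).
    assert (Hx : in_l2 x) by now apply in_l2_scal.
    assert (Hhalf : Cmod (RtoC (/ 2)) = / 2) by (rewrite Cmod_R; apply Rabs_pos_eq; lra).
    assert (HKx : K x = vscal (RtoC (/ 2)) (K w)) by (now apply bounded_scal).
    destruct (Hnet x Hx) as (u & Hu & Hxu); [unfold x; rewrite l2norm_vscal, Hhalf by auto; lra|].
    assert (l2norm (K x) <= delta).
    { apply (l2norm_le_of_orth _ u); auto using bounded_in_l2.
      unfold rinner. rewrite HKx, inner_scal_l by auto using bounded_in_l2.
      specialize (Hv0 u Hu). unfold defect in Hv0. fold w in Hv0. rewrite Hv0. simpl. ring. }
    rewrite HKx, l2norm_vscal, Hhalf in H0 by auto using bounded_in_l2. lra. }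
  pose proof (distance_to_range_bound v Hv (range_fixed P HP v HvP)) as Hkey. fold w in Hkey.
  rewrite Hv1 in Hkey. pose proof (l2norm_nonneg w). pose proof (l2norm_nonneg (K w)).
  assert (l2norm (K w) * l2norm w <= 2 * delta * 2) by (apply Rmult_le_compat; auto).
  lra.
Qed.

End CalkinToEss.

Lemma dist_le_l2norm v F w : F w -> Rbar_le (Defs.dist v F) (l2norm (vsub v w)).
Proof.
  intros Hw. destruct (Glb_Rbar_correct (fun r => exists w, F w /\ r = l2norm (vsub v w))) as [Hlb _].
  apply Hlb. eauto.
Qed.

Lemma ess_contained_of_calkin_le P Q : is_orth_proj P -> is_orth_proj Q ->
  calkin_le P Q -> ess_contained (range P) (range Q).
Proof.
  intros HP HQ (Cop & Cadj & K & HCop & HCadj & Hadj & (HK & Hnets) & Hdecomp) eps Heps.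
  set (delta := eps ^ 4 / 4).
  destruct (Hnets delta) as (l & Hl & Hnet); [apply Rdiv_lt_0_compat; [now apply pow_lt | lra]|].
  pose proof (defect_bounded Q K HQ HK) as HL.
  pose proof (range_closed_subspace P HP) as HPc.
  exists (annihilated_by (range P) (defect Q K) l). split; [|split; [|split]].
  - now apply annihilated_closed.
  - now intros v (Hv & _).
  - now apply annihilated_finite_codim.
  - intros v Hv Hv1. pose proof (annihilated_in_l2 _ _ _ HPc v Hv) as Hvl.
    eapply Rbar_le_trans; [apply (dist_le_l2norm v (range Q) (Q v)), range_of; auto|].
    simpl. apply pow4_le; [apply l2norm_nonneg | lra|].
    eapply Rle_trans; [apply (annihilated_unit_near_range P Q Cop Cadj K) with (l := l); auto|].
    unfold delta. lra.
Qed.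

(** * Peeling a rank-one projection off an orthogonal projection *)

Definition peel (Pi : operator) (h : vec) : operator :=
  fun x => vsub (Pi x) (vscal (inner (Pi x) h) h).

Section Peel.
Variables (Pi : operator) (h : vec).
Hypothesis HPi : is_orth_proj Pi.
Hypothesis Hh : in_l2 h.
Hypothesis Hh1 : l2norm h = 1.
Hypothesis HPh : Pi h = h.

Lemma inner_unit_self : inner h h = RtoC 1.
Proof. rewrite inner_self, Hh1 by auto. unfold RtoC; f_equal; ring. Qed.

Lemma peel_bounded : is_bounded_op (peel Pi h).
Proof. apply bounded_vsub; [now apply proj_bounded | apply bounded_rank_one; auto using proj_bounded]. Qed.

Lemma peel_in_range x : in_l2 x -> range Pi (peel Pi h x) /\ inner (peel Pi h x) h = RtoC 0.
Proof.
  intros Hx. pose proof (proj_in_l2 Pi HPi x Hx). pose proof (range_closed_subspace Pi HPi) as Hc.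
  split.
  - unfold peel. apply csub_sub; auto; [now apply range_of|].
    apply csub_scal; auto. rewrite <- HPh. now apply range_of.
  - unfold peel. rewrite inner_sub_l, inner_scal_l, inner_unit_self by auto using in_l2_scal. ring.
Qed.

Lemma peel_fixed v : range Pi v -> inner v h = RtoC 0 -> peel Pi h v = v.
Proof.
  intros Hv Hvh. unfold peel. rewrite (range_fixed Pi HPi v Hv), Hvh. vext. ring.
Qed.

Lemma peel_orth_proj : is_orth_proj (peel Pi h).
Proof.
  pose proof (proj_bounded Pi HPi) as HB. pose proof (proj_selfadjoint Pi HPi) as Hadj.
  split; [apply peel_bounded|]. split.
  - intros x Hx. destruct (peel_in_range x Hx). now apply peel_fixed.
  - intros x y Hx Hy. pose proof (proj_in_l2 Pi HPi x Hx); pose proof (proj_in_l2 Pi HPi y Hy).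
    unfold peel. rewrite inner_sub_l, inner_scal_l, inner_sub_r, inner_scal_r, Hadj by auto using in_l2_scal.
    assert (E1 : Cconj (inner (Pi y) h) = inner h y)
      by (rewrite <- inner_conj, <- Hadj, HPh by auto; reflexivity).
    assert (E2 : inner x h = inner (Pi x) h) by (rewrite <- HPh at 1; rewrite Hadj; auto).
    rewrite E1, E2. ring.
Qed.

Lemma range_peel v : range (peel Pi h) v <-> range Pi v /\ inner v h = RtoC 0.
Proof.
  split.
  - intros (x & Hx & ->). now apply peel_in_range.
  - intros (Hv & Hvh). exists v. split; [now apply (range_in_l2 Pi) | symmetry; now apply peel_fixed].
Qed.

End Peel.

(* When [range Pi = N + C z] with [N] closed and [z] outside [N], the coefficient of [z] is a
   bounded functional on the whole space; its Riesz vector, normalised, is a unit normal to [N] in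
   [range Pi]. *)
Section LineNormal.
Variables (Pi : operator) (N : subspace) (z : vec).
Hypothesis HPi : is_orth_proj Pi.
Hypothesis HN : is_closed_subspace N.
Hypothesis Hz : in_l2 z.
Hypothesis Hnz : ~ N z.
Hypothesis Hr : forall v, range Pi v <-> add_line N z v.

Definition is_line_coeff x c := N (vsub (Pi x) (vscal c z)).

Lemma line_coeff_unique x c1 c2 : is_line_coeff x c1 -> is_line_coeff x c2 -> c1 = c2.
Proof.
  intros H1 H2. apply NNPP. intro Hne. apply Hnz.
  assert (Hne' : Cminus c1 c2 <> RtoC 0).
  { intro E. apply Hne. replace c1 with (Cplus (Cminus c1 c2) c2) by ring. rewrite E. ring. }
  replace z with (vscal (Cinv (Cminus c1 c2)) (vsub (vsub (Pi x) (vscal c2 z)) (vsub (Pi x) (vscal c1 z))))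
    by (vext; field; auto).
  now apply csub_scal, csub_sub.
Qed.

Definition line_coeff x : C := epsilon (inhabits (RtoC 0)) (is_line_coeff x).

Lemma line_coeff_spec x : in_l2 x -> is_line_coeff x (line_coeff x).
Proof. intros Hx. unfold line_coeff. apply epsilon_spec, Hr. now exists x. Qed.

Lemma line_coeff_eq x c : in_l2 x -> is_line_coeff x c -> line_coeff x = c.
Proof. intros Hx Hc. apply (line_coeff_unique x); auto. now apply line_coeff_spec. Qed.

Lemma line_coeff_add x y : in_l2 x -> in_l2 y -> line_coeff (vadd x y) = Cplus (line_coeff x) (line_coeff y).
Proof.
  intros Hx Hy. apply line_coeff_eq; [now apply in_l2_add|]. unfold is_line_coeff.
  rewrite (bounded_add Pi (proj_bounded Pi HPi)) by auto.
  replace (vsub (vadd (Pi x) (Pi y)) (vscal (Cplus (line_coeff x) (line_coeff y)) z)) with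
    (vadd (vsub (Pi x) (vscal (line_coeff x) z)) (vsub (Pi y) (vscal (line_coeff y) z))) by (vext; ring).
  apply csub_add; auto; now apply line_coeff_spec.
Qed.

Lemma line_coeff_scal a x : in_l2 x -> line_coeff (vscal a x) = Cmult a (line_coeff x).
Proof.
  intros Hx. apply line_coeff_eq; [now apply in_l2_scal|]. unfold is_line_coeff.
  rewrite (bounded_scal Pi (proj_bounded Pi HPi)) by auto.
  replace (vsub (vscal a (Pi x)) (vscal (Cmult a (line_coeff x)) z)) with
    (vscal a (vsub (Pi x) (vscal (line_coeff x) z))) by (vext; ring).
  apply csub_scal; auto; now apply line_coeff_spec.
Qed.

Lemma line_coeff_bound : exists M, 0 <= M /\ forall x, in_l2 x -> Cmod (line_coeff x) <= M * l2norm x.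
Proof.
  destruct (add_line_lower_bound N HN z Hz Hnz) as (delta & Hdelta & Hdel).
  exists (/ delta). split; [left; now apply Rinv_0_lt_compat|].
  intros x Hx. pose proof (Hdel _ (line_coeff x) (line_coeff_spec x Hx)) as H.
  replace (vadd (vsub (Pi x) (vscal (line_coeff x) z)) (vscal (line_coeff x) z)) with (Pi x) in H
    by (vext; ring).
  pose proof (proj_norm_le Pi HPi x Hx).
  apply Rmult_le_reg_l with delta; auto. rewrite <- Rmult_assoc, Rinv_r by lra. lra.
Qed.

Lemma line_coeff_zero w : range Pi w -> (line_coeff w = RtoC 0 <-> N w).
Proof.
  intros Hw. pose proof (range_in_l2 Pi HPi w Hw) as Hwl.
  pose proof (line_coeff_spec w Hwl) as Hs. unfold is_line_coeff in Hs.
  rewrite (range_fixed Pi HPi w Hw) in Hs. split.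
  - intros H0. now rewrite H0, vsub_vscal_0 in Hs.
  - intros HNw. apply line_coeff_eq; auto. unfold is_line_coeff.
    now rewrite (range_fixed Pi HPi w Hw), vsub_vscal_0.
Qed.

Lemma line_unit_normal : exists h, in_l2 h /\ l2norm h = 1 /\ Pi h = h /\
  forall w, range Pi w -> (inner w h = RtoC 0 <-> N w).
Proof.
  pose proof (proj_selfadjoint Pi HPi) as Hadj.
  destruct line_coeff_bound as (M & HM & Hbd).
  destruct (riesz line_coeff M HM line_coeff_add line_coeff_scal Hbd) as (y & Hy & Hphi).
  set (h0 := Pi y). assert (Hh0 : in_l2 h0) by now apply proj_in_l2.
  assert (Hw : forall w, range Pi w -> line_coeff w = inner w h0).
  { intros w Hwr. pose proof (range_in_l2 Pi HPi w Hwr). rewrite Hphi by auto.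
    rewrite <- (range_fixed Pi HPi w Hwr) at 1. now apply Hadj. }
  assert (Hz0 : vsub z (vscal (RtoC 1) z) = vzero) by (vext; ring).
  assert (Hzr : range Pi z) by (apply Hr; exists (RtoC 1); rewrite Hz0; now apply csub_zero).
  assert (Hzh0 : inner z h0 = RtoC 1).
  { rewrite <- Hw by auto. apply line_coeff_eq; auto. unfold is_line_coeff.
    rewrite (range_fixed Pi HPi z Hzr), Hz0. now apply csub_zero. }
  assert (Hnh : 0 < l2norm h0).
  { destruct (l2norm_nonneg h0) as [|E]; auto. exfalso. symmetry in E. apply l2norm_eq0 in E; auto.
    rewrite E, inner_zero_r in Hzh0 by auto. now apply C1_nz. }
  set (c := RtoC (/ l2norm h0)).
  assert (Hc : c <> RtoC 0) by (intro E; apply RtoC_inj in E; revert E; apply Rinv_neq_0_compat; lra).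
  assert (Hcc : Cconj c = c) by (unfold c, Cconj, RtoC; simpl; f_equal; ring).
  exists (vscal c h0). split; [|split; [|split]].
  - now apply in_l2_scal.
  - rewrite l2norm_vscal by auto. unfold c. rewrite Cmod_R, Rabs_pos_eq by (left; now apply Rinv_0_lt_compat).
    field; lra.
  - unfold h0. rewrite bounded_scal, proj_idem by auto using proj_bounded. reflexivity.
  - intros w Hwr. pose proof (range_in_l2 Pi HPi w Hwr).
    rewrite inner_scal_r, Hcc, <- Hw, <- line_coeff_zero by auto. split.
    + intros H0. apply NNPP. intro Hne. revert H0. now apply Cmult_neq_0.
    + intros ->. apply Cmult_0_r.
Qed.

End LineNormal.

(** * From essential containment to the Calkin order *)

Lemma has_finite_net_add_rank_one A (f : vec -> C) g Rb e1 e2 :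
  (forall x, in_l2 x -> in_l2 (A x)) -> in_l2 g -> 0 < e2 ->
  (forall x, in_l2 x -> l2norm x <= 1 -> Rabs (fst (f x)) <= Rb /\ Rabs (snd (f x)) <= Rb) ->
  has_finite_net A e1 -> has_finite_net (fun x => vadd (A x) (vscal (f x) g)) (e1 + e2).
Proof.
  intros HA Hg He2 Hf HnA. apply has_finite_net_add; auto.
  - intros; now apply in_l2_scal.
  - now apply (has_finite_net_rank_one f g Rb).
Qed.

Lemma inner_components_bound a h Rb : in_l2 a -> in_l2 h -> l2norm h = 1 -> l2norm a <= Rb ->
  Rabs (fst (inner a h)) <= Rb /\ Rabs (snd (inner a h)) <= Rb.
Proof.
  intros Ha Hh Hh1 HRb. pose proof (inner_re_bound a h Ha Hh). pose proof (inner_im_bound a h Ha Hh).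
  rewrite Hh1, Rmult_1_r in *. split; lra.
Qed.

Section EssToCalkin.
Variables (Q : operator) (E0 : subspace) (eps : R).
Hypothesis HQ : is_orth_proj Q.
Hypothesis HE0 : is_closed_subspace E0.
Hypothesis Heps : 0 <= eps.
Hypothesis HE0Q : forall v, E0 v -> l2norm (vsub v (Q v)) <= eps * l2norm v.

(* For [Pi = P] these are the operators [(1 - Q) P] and [P (1 - Q)]. *)
Definition netted_defects (Pi : operator) : Prop :=
  forall e, eps < e -> has_finite_net (fun x => vsub (Pi x) (Q (Pi x))) e /\
                      has_finite_net (fun x => Pi (vsub x (Q x))) e.

Lemma netted_defects_base Pi : is_orth_proj Pi -> (forall v, range Pi v <-> E0 v) -> netted_defects Pi.
Proof.
  intros HPi Hr e He. pose proof (proj_bounded Q HQ) as HQb. split.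
  - apply has_finite_net_small with eps; auto. intros x Hx Hx1.
    eapply Rle_trans; [apply HE0Q, Hr, range_of; auto|].
    pose proof (proj_norm_le Pi HPi x Hx). pose proof (l2norm_nonneg (Pi x)). nra.
  - apply has_finite_net_small with eps; auto. intros x Hx Hx1.
    assert (HxQ : in_l2 (vsub x (Q x))) by (apply in_l2_sub; auto using proj_in_l2).
    set (w := Pi (vsub x (Q x))).
    assert (Hwr : range Pi w) by now apply range_of.
    assert (Hw : in_l2 w) by now apply proj_in_l2.
    pose proof (proj_in_l2 Q HQ w Hw).
    (* [|w|^2 = <x - Q x, w> = <x, w - Q w>] *)
    apply le_of_sq_le_mul; [auto|]. rewrite <- rinner_self by auto. unfold w at 1.
    rewrite (rinner_adjoint Pi Pi), (range_fixed Pi HPi w Hwr), rinner_sub_l, (rinner_adjoint Q Q),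
      <- rinner_sub_r by auto using proj_in_l2, proj_selfadjoint.
    eapply Rle_trans; [apply rinner_le; auto; now apply in_l2_sub|].
    pose proof (l2norm_nonneg w). pose proof (l2norm_nonneg (vsub w (Q w))).
    assert (l2norm (vsub w (Q w)) <= eps * l2norm w) by (apply HE0Q, Hr; auto).
    apply Rle_trans with (1 * l2norm (vsub w (Q w))); [apply Rmult_le_compat_r; auto|]. nra.
Qed.

Section PeelStep.
Variables (Pi : operator) (h : vec).
Hypothesis HPi : is_orth_proj Pi.
Hypothesis Hh : in_l2 h.
Hypothesis Hh1 : l2norm h = 1.
Hypothesis HPh : Pi h = h.

Lemma peel_eq x : in_l2 x -> Pi x = vadd (peel Pi h x) (vscal (inner (Pi x) h) h).
Proof. intros. unfold peel. vext. ring. Qed.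

Lemma netted_defects_of_peel : netted_defects (peel Pi h) -> netted_defects Pi.
Proof.
  intros Hnet e He. pose proof (proj_bounded Q HQ) as HQb.
  pose proof (peel_orth_proj Pi h HPi Hh Hh1 HPh) as HPi'.
  destruct (Hnet ((e + eps) / 2)) as (Hn1 & Hn2); [lra|].
  replace e with ((e + eps) / 2 + (e - eps) / 2) by field. split.
  - apply (has_finite_net_ext (fun x => vadd (vsub (peel Pi h x) (Q (peel Pi h x)))
                                             (vscal (inner (Pi x) h) (vsub h (Q h))))).
    + intros x Hx. pose proof (proj_in_l2 _ HPi' x Hx).
      set (p := peel Pi h x). set (c := inner (Pi x) h). rewrite (peel_eq x Hx).
      rewrite (bounded_add Q), (bounded_scal Q) by auto using in_l2_scal. unfold p, c. vext. ring.
    + apply has_finite_net_add_rank_one with (Rb := 1); auto using in_l2_sub, proj_in_l2; [lra|].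
      intros x Hx Hx1. apply inner_components_bound; auto using proj_in_l2.
      pose proof (proj_norm_le Pi HPi x Hx). lra.
  - apply (has_finite_net_ext (fun x => vadd (peel Pi h (vsub x (Q x)))
                                             (vscal (inner (Pi (vsub x (Q x))) h) h))).
    + intros x Hx. symmetry. apply peel_eq. apply in_l2_sub; auto using proj_in_l2.
    + apply has_finite_net_add_rank_one with (Rb := 2); auto; [|lra|].
      { intros x Hx. apply proj_in_l2; auto. apply in_l2_sub; auto using proj_in_l2. }
      intros x Hx Hx1. assert (HxQ : in_l2 (vsub x (Q x))) by (apply in_l2_sub; auto using proj_in_l2).
      apply inner_components_bound; auto using proj_in_l2.
      pose proof (proj_norm_le Pi HPi _ HxQ). pose proof (l2norm_vsub_le x (Q x) Hx (proj_in_l2 Q HQ x Hx)).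
      pose proof (proj_norm_le Q HQ x Hx). lra.
Qed.

End PeelStep.

Lemma netted_defects_add_lines l : (forall u, In u l -> in_l2 u) ->
  forall Pi, is_orth_proj Pi -> (forall v, range Pi v <-> add_lines E0 l v) -> netted_defects Pi.
Proof.
  induction l as [|z l' IH]; intros Hl Pi HPi Hr; [now apply netted_defects_base|].
  assert (Hl' : forall u, In u l' -> in_l2 u) by (intros; apply Hl; now right).
  assert (HN : is_closed_subspace (add_lines E0 l')) by now apply add_lines_closed.
  destruct (classic (add_lines E0 l' z)) as [Hzin | Hzout].
  - apply IH; auto. intros v. rewrite Hr. now apply add_line_of_mem.
  - destruct (line_unit_normal Pi (add_lines E0 l') z HPi HN (Hl z (or_introl eq_refl)) Hzout Hr)
      as (h & Hh & Hh1 & HPh & Hker).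
    apply (netted_defects_of_peel Pi h); auto. apply IH; auto.
    + now apply peel_orth_proj.
    + intros v. rewrite range_peel by auto. split.
      * intros (Hv & Hvh). now apply Hker.
      * intros Hv. assert (Hvr : range Pi v) by (apply Hr; exists (RtoC 0); now rewrite vsub_vscal_0).
        split; auto. now apply Hker.
Qed.

End EssToCalkin.

Lemma l2norm_proj_compl_le_dist Q u : is_orth_proj Q -> in_l2 u ->
  Rbar_le (l2norm (vsub u (Q u))) (Defs.dist u (range Q)).
Proof.
  intros HQ Hu.
  apply (Glb_Rbar_correct (fun r => exists w, range Q w /\ r = l2norm (vsub u w))). intros r (w & Hw & ->). simpl. now apply proj_nearest.
Qed.

Lemma proj_compl_bound_of_dist Q E0 (eps : R) : is_orth_proj Q -> is_closed_subspace E0 ->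
  (forall v, E0 v -> l2norm v = 1 -> Rbar_le (Defs.dist v (range Q)) eps) ->
  forall v, E0 v -> l2norm (vsub v (Q v)) <= eps * l2norm v.
Proof.
  intros HQ HE0 Hunit v Hv. pose proof (csub_in_l2 E0 HE0 v Hv) as Hvl.
  destruct (l2norm_nonneg v) as [Hpos | Hz].
  - set (c := RtoC (/ l2norm v)). set (u := vscal c v).
    assert (Hc : Cmod c = / l2norm v)
      by (unfold c; rewrite Cmod_R; apply Rabs_pos_eq; left; now apply Rinv_0_lt_compat).
    assert (Hul : in_l2 u) by now apply in_l2_scal.
    assert (Hu1 : l2norm u = 1) by (unfold u; rewrite l2norm_vscal, Hc by auto; field; lra).
    assert (Hd : l2norm (vsub u (Q u)) <= eps).
    { pose proof (Rbar_le_trans _ _ (Finite eps) (l2norm_proj_compl_le_dist Q u HQ Hul)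
                    (Hunit u ltac:(now apply csub_scal) Hu1)). auto. }
    replace (vsub u (Q u)) with (vscal c (vsub v (Q v))) in Hd
      by (unfold u; rewrite (bounded_scal Q) by auto using proj_bounded; vext; ring).
    rewrite l2norm_vscal, Hc in Hd by (apply in_l2_sub; auto using proj_in_l2).
    apply Rmult_le_reg_l with (/ l2norm v); [now apply Rinv_0_lt_compat|].
    replace (/ l2norm v * (eps * l2norm v)) with eps by (field; lra). auto.
  - symmetry in Hz. apply l2norm_eq0 in Hz; auto. subst v.
    rewrite (bounded_zero Q), vsub_diag, l2norm_vzero by auto using proj_bounded. lra.
Qed.

Lemma ess_contained_defect_nets P Q : is_orth_proj P -> is_orth_proj Q ->
  ess_contained (range P) (range Q) ->
  forall e, 0 < e -> has_finite_net (fun x => vadd (vsub (P x) (Q (P x))) (P (vsub x (Q x)))) e.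
Proof.
  intros HP HQ Hess e He.
  destruct (Hess (e / 4)) as (E0 & HE0 & HE0P & Hcodim & Hunit); [lra|].
  destruct (finite_codim_add_lines E0 (range P) (range_closed_subspace P HP) HE0P Hcodim) as (l & Hl & Hr).
  pose proof (proj_compl_bound_of_dist Q E0 (e / 4) HQ HE0 Hunit) as HE0Q.
  destruct (netted_defects_add_lines Q E0 (e / 4) HQ HE0 ltac:(lra) HE0Q l
              ltac:(intros u Hu; now apply (range_in_l2 P HP), Hl) P HP Hr (e / 2)) as (H1 & H2); [lra|].
  replace e with (e / 2 + e / 2) by field.
  apply has_finite_net_add; auto; intros x Hx.
  - apply in_l2_sub; auto using proj_in_l2.
  - apply proj_in_l2, in_l2_sub; auto using proj_in_l2.
Qed.

Lemma calkin_le_of_ess_contained P Q : is_orth_proj P -> is_orth_proj Q ->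
  ess_contained (range P) (range Q) -> calkin_le P Q.
Proof.
  intros HP HQ Hess. pose proof (proj_bounded P HP) as HPb. pose proof (proj_bounded Q HQ) as HQb.
  set (C := fun x => vsub (Q x) (P x)).
  assert (HC : is_bounded_op C) by now apply bounded_vsub.
  exists C, C, (fun x => vsub (C x) (C (C x))). split; [|split; [|split; [|split]]]; auto.
  - intros x y Hx Hy. unfold C.
    rewrite inner_sub_l, inner_sub_r, (proj_selfadjoint Q HQ), (proj_selfadjoint P HP)
      by auto using proj_in_l2.
    reflexivity.
  - split; [apply bounded_vsub; auto; now apply bounded_comp|].
    (* [C - C^2 = Q P + P Q - 2 P = -((1 - Q) P + P (1 - Q))] *)
    intros e He. eapply has_finite_net_ext;
      [|apply has_finite_net_opp, (ess_contained_defect_nets P Q); auto].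
    + intros x Hx. pose proof (proj_in_l2 P HP x Hx); pose proof (proj_in_l2 Q HQ x Hx). unfold C.
      rewrite !(bounded_sub Q), !(bounded_sub P), !(proj_idem Q), !(proj_idem P) by auto using proj_in_l2.
      vext. ring.
    + intros x Hx. apply in_l2_add; [apply in_l2_sub|apply proj_in_l2, in_l2_sub]; auto using proj_in_l2.
  - intros x Hx. change (vsub (Q x) (P x)) with (C x). vext. ring.
Qed.

Theorem proposition3p3 (P Q : operator) :
  is_orth_proj P -> is_orth_proj Q ->
  (calkin_le P Q <-> ess_contained (range P) (range Q)).
Proof.
  intros HP HQ. split.
  - now apply ess_contained_of_calkin_le.
  - now apply calkin_le_of_ess_contained.
Qed.
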